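(* Let $\mathscr{T}\colon \mathbb{IDA}\to\mathbb{IM}$ be a functor satisfying (T1)–(T4) below. Then the functors $\Gamma\colon \mathbb{COL}\to\mathscr{T}\mathbb{ODA}$ and $\Psi\colon\mathscr{T}\mathbb{ODA}\to\mathbb{COL}$ described below, together with the natural isomorphisms $\mu\colon 1_{\mathbb{COL}}\Rightarrow \Psi\circ\Gamma$ with components $\mu_{\mathcal M}(m)=\{\pi_m\}$ and $\lambda\colon 1_{\mathscr{T}\mathbb{ODA}}\Rightarrow\Gamma\circ\Psi$ with components $\lambda_{\mathfrak K}(k)=\{\nu_{\mathfrak K}(s)\mid s\in S_k\}$ (where $S_k\subseteq\mathscr{T}(K)$ is the unique subset with $k=\bigsqcup S_k$), establish a categorical equivalence between $\mathbb{COL}$ and $\mathscr{T}\mathbb{ODA}$.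
   Context: An involutive unital quantale is $(Q,\bigsqcup,\odot,{}^*,e)$: $Q$ a complete join-semilattice (hence complete lattice with order $\sqsubseteq$, $0=\bigsqcup\emptyset$, $1=\bigsqcup Q$), $\odot$ associative and distributing over arbitrary joins in each argument, $e$ a two-sided unit, and ${}^*$ satisfying $x^{**}=x$, $(x\odot y)^*=y^*\odot x^*$, $(\bigsqcup_i x_i)^*=\bigsqcup_i x_i^*$. An involutive generalized dynamic algebra (IDA) is $\mathfrak K=(K,\bigsqcup,\odot,{}^*,{\sim},e)$ with $(K,\bigsqcup,\odot,{}^*,e)$ an involutive unital quantale and ${\sim}\colon K\to K$ such that for all $x,y\in K$ and all families $(x_i)_{i\in I}$: ${\sim}(x\odot{\sim}{\sim}y)={\sim}(x\odot y)$; ${\sim}(\bigsqcup_i{\sim}{\sim}x_i)={\sim}(\bigsqcup_i x_i)$; $({\sim}x)^*={\sim}x$; ${\sim}{\sim}({\sim}{\sim}x\odot y)={\sim}({\sim}x\sqcup{\sim}({\sim}x\sqcup y))$. Its test set is $\widetilde K=\{{\sim}k\mid k\in K\}$; for $W\subseteq\widetilde K$ put $\bigvee W={\sim}{\sim}(\bigsqcup W)$; for $w\in\widetilde K$ put $w^\perp={\sim}w$; $k\preceq l$ iff $\bigvee\{k,l\}=l$. For $k\in K,v\in\widetilde K$ put $k\bullet v={\sim}{\sim}(k\odot v)$, and $k\equiv l$ iff $k\bullet w=l\bullet w$ for all $w\in\widetilde K$. A morphism of IDAs is a map preserving arbitrary joins, $\odot$, ${}^*$, the unit and ${\sim}$;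 this gives the category $\mathbb{IDA}$. An IDA is semi-Foulis if $(\widetilde K,\preceq,{}^\perp)$ is a complete orthomodular lattice. $\mathbb{IM}$ is the category of involutive monoids $(M,\cdot,e,{}^* )$ ($x^{**}=x$, $(xy)^*=y^*x^*$) with maps preserving product, unit and involution. For an orthomodular lattice $\mathcal M=(M,\le,{}^\perp)$ and $m\in M$, the Sasaki projection is $\pi_m(x)=m\wedge(m^\perp\vee x)$. If $\mathcal M$ is complete, a map $f\colon M\to M$ is linear if there is $g\colon M\to M$ (unique, written $f^*$) with $f(x)\le y^\perp\iff x\le g(y)^\perp$ for all $x,y$. $\mathbf{Lin}(\mathcal M)$, the set of linear maps with pointwise joins, composition, involution $f\mapsto f^*$ and unit $\mathrm{id}_M$, is an involutive unital quantale, regarded as an IDA with ${\sim}f=\pi_{(f(1))^\perp}$; each $\pi_m$ is in $\mathbf{Lin}(\mathcal M)$ with $\pi_m^*=\pi_m$, and the test set of $\mathbf{Lin}(\mathcal M)$ is $\{\pi_m\mid m\in M\}$. For an involutive submonoid $L$ of $(\mathbf{Lin}(\mathcal M),\circ,{}^*,\mathrm{id}_M)$ containing all $\pi_m$, let $\mathscr P(L)=(\mathscr P(L),\bigcup,\odot,{}^*,{\sim},\{\mathrm{id}_M\})$ where $\mathscr P(L)$ is the powerset, $A\odot B=\{a\circ b\mid a\in A,b\in B\}$, $A^*=\{a^*\mid a\in A\}$, ${\sim}A=\{\pi_{(\bigvee_{a\in A}a(1))^\perp}\}$; it is an IDA. $\mathscr{T}\colon\mathbb{IDA}\to\mathbb{IM}$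 is a functor with: (T1) for every IDA $\mathfrak K$, $\widetilde K\subseteq\mathscr T(K)\subseteq K$ and $\mathscr T(\mathfrak K)=(\mathscr T(K),\odot,{}^*,e)$ is an involutive submonoid; (T2) for every semi-Foulis IDA $\mathfrak K$ such that for all $s,t\in\mathscr T(K)$, $s=t$ iff $s\equiv t$, the map $\nu_{\mathfrak K}\colon\mathscr T(\mathfrak K)\to\mathscr T(\mathbf{Lin}(\widetilde{\mathfrak K}))$, $\nu_{\mathfrak K}(k)=k\bullet(-)$, is an isomorphism in $\mathbb{IM}$; (T3) for every complete orthomodular lattice $\mathcal M$, $f\mapsto\{f\}$ is an isomorphism $\mathscr T(\mathbf{Lin}(\mathcal M))\to\mathscr T(\mathscr P(\mathscr T(\mathbf{Lin}(\mathcal M))))$ in $\mathbb{IM}$; (T4) for every IDA morphism $f\colon\mathfrak K_1\to\mathfrak K_2$, $\mathscr T(f)$ is the restriction of $f$ to $\mathscr T(K_1)$. A $\mathscr T$-based orthomodular dynamic algebra is an IDA $\mathfrak K$ with: (TODA1) $(\widetilde K,\preceq,{}^\perp)$ is a complete orthomodular lattice; (TODA2) any $A$ with $\mathscr T(K)\subseteq A\subseteq K$ closed under $\odot$, ${}^*$ and arbitrary joins equals $K$; (TODA3) for $S,T\subseteq\mathscr T(K)$, $\bigsqcup S=\bigsqcup T$ iff $S=T$; (TODA4) for $s,t\in\mathscr T(K)$, $s=t$ iff $s\equiv t$. The category $\mathscr T\mathbb{ODA}$ has these as objects and bijective IDA morphisms as morphisms. $\mathbb{COL}$ has complete orthomodular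 lattices as objects and ortholattice isomorphisms (bijections $g$ with $m\le n\iff g(m)\le g(n)$ and $g(m^\perp)=g(m)^\perp$) as morphisms. $\Gamma(\mathcal M)=\mathscr P(\mathscr T(\mathbf{Lin}(\mathcal M)))$ and for an ortholattice isomorphism $k$, $\Gamma(k)(A)=\{k\circ a\circ k^{-1}\mid a\in A\}$. $\Psi(\mathfrak K)=(\widetilde K,\preceq,{}^\perp)$ and $\Psi(\phi)=\phi|_{\widetilde K}$. *)

From Stdlib Require Import ClassicalEpsilon.


Definition pair2 {A : Type} (x y : A) : A -> Prop := fun z => z = x \/ z = y.
Definition imageP {A B : Type} (f : A -> B) (S : A -> Prop) : B -> Prop :=
  fun z => exists y, S y /\ z = f y.
Definition bij {A B : Type} (f : A -> B) : Prop :=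
  (forall x y, f x = f y -> x = y) /\ (forall y, exists x, f x = y).

Record OLstr := mkOL {
  ocar : Type;
  ole : ocar -> ocar -> Prop;
  oc : ocar -> ocar
}.

Definition is_lub (M : OLstr) (S : ocar M -> Prop) (s : ocar M) : Prop :=
  (forall x, S x -> ole M x s) /\ (forall u, (forall x, S x -> ole M x u) -> ole M s u).
Definition is_glb (M : OLstr) (S : ocar M -> Prop) (s : ocar M) : Prop :=
  (forall x, S x -> ole M s x) /\ (forall u, (forall x, S x -> ole M u x) -> ole M u s).

Definition is_COL (M : OLstr) : Prop :=
  (forall x, ole M x x) /\
  (forall x y, ole M x y -> ole M y x -> x = y) /\
  (forall x y z, ole M x y -> ole M y z -> ole M x z) /\
  (forall S : ocar M -> Prop, exists s, is_lub M S s) /\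
  (forall x, oc M (oc M x) = x) /\
  (forall x y, ole M x y -> ole M (oc M y) (oc M x)) /\
  (* x /\ x^perp = 0 *)
  (forall x z, ole M z x -> ole M z (oc M x) -> forall w, ole M z w) /\
  (* x \/ x^perp = 1 *)
  (forall x z, ole M x z -> ole M (oc M x) z -> forall w, ole M w z) /\
  (* orthomodular law: x <= y -> y = x \/ (y /\ x^perp) *)
  (forall x y m j, ole M x y -> is_glb M (pair2 y (oc M x)) m ->
     is_lub M (pair2 x m) j -> j = y).

Definition is_COL_mor (M N : OLstr) (g : ocar M -> ocar N) : Prop :=
  bij g /\ (forall m n, ole M m n <-> ole N (g m) (g n)) /\
  (forall m, g (oc M m) = oc N (g m)).

(* sups/infs in a complete lattice (chosen classically; x0 only witnesses
   inhabitation) *)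
Definition osup (M : OLstr) (x0 : ocar M) (S : ocar M -> Prop) : ocar M :=
  epsilon (inhabits x0) (is_lub M S).
Definition oinf (M : OLstr) (x0 : ocar M) (S : ocar M -> Prop) : ocar M :=
  epsilon (inhabits x0) (is_glb M S).
Definition otop (M : OLstr) (x0 : ocar M) : ocar M := osup M x0 (fun _ => True).

(* Sasaki projection pi_m(x) = m /\ (m^perp \/ x) *)
Definition sasaki (M : OLstr) (m : ocar M) : ocar M -> ocar M :=
  fun x => oinf M m (pair2 m (osup M m (pair2 (oc M m) x))).

Definition is_adjoint (M : OLstr) (f g : ocar M -> ocar M) : Prop :=
  forall x y, ole M (f x) (oc M y) <-> ole M x (oc M (g y)).
Definition linear (M : OLstr) (f : ocar M -> ocar M) : Prop :=
  exists g, is_adjoint M f g.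
Definition adj (M : OLstr) (f : ocar M -> ocar M) : ocar M -> ocar M :=
  epsilon (inhabits (fun x : ocar M => x)) (is_adjoint M f).

Definition LinT (M : OLstr) : Type := {f : ocar M -> ocar M | linear M f}.

Lemma id_linear (M : OLstr) : linear M (fun x => x).
Proof. exists (fun x => x). intros x y. split; intro H; exact H. Qed.

(* packs a map into Lin(M); used only on maps that are linear (the operations
   of Lin(M) are closed), the default branch is never reached there *)
Definition mkLin (M : OLstr) (f : ocar M -> ocar M) : LinT M :=
  match excluded_middle_informative (linear M f) with
  | left p => exist _ f p
  | right _ => exist _ (fun x => x) (id_linear M)
  end.

Record IDAstr := mkIDA {
  icar : Type;
  ijoin : (icar -> Prop) -> icar;
  imul : icar -> icar -> icar;
  iinv : icar -> icar;
  ineg : icar -> icar;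
  iunit : icar
}.

Section IDAdefs.
Variable K : IDAstr.
Local Notation J := (ijoin K).
Local Notation "x * y" := (imul K x y).
Local Notation "~~ x" := (ineg K x) (at level 35).

Definition ile (x y : icar K) : Prop := J (pair2 x y) = y.

Definition is_IQuantale : Prop :=
  (forall x, ile x x) /\
  (forall x y, ile x y -> ile y x -> x = y) /\
  (forall x y z, ile x y -> ile y z -> ile x z) /\
  (forall S x, S x -> ile x (J S)) /\
  (forall S u, (forall x, S x -> ile x u) -> ile (J S) u) /\
  (forall x y z, (x * y) * z = x * (y * z)) /\
  (forall x, iunit K * x = x) /\ (forall x, x * iunit K = x) /\
  (forall x S, x * J S = J (imageP (fun y => x * y) S)) /\
  (forall S y, J S * y = J (imageP (fun x => x * y) S)) /\
  (forall x, iinv K (iinv K x) = x) /\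
  (forall x y, iinv K (x * y) = iinv K y * iinv K x) /\
  (forall S, iinv K (J S) = J (imageP (iinv K) S)).

Definition is_IDA : Prop :=
  is_IQuantale /\
  (forall x y, ~~ (x * ~~ (~~ y)) = ~~ (x * y)) /\
  (forall S, ~~ (J (imageP (fun x => ~~ (~~ x)) S)) = ~~ (J S)) /\
  (forall x, iinv K (~~ x) = ~~ x) /\
  (forall x y, ~~ (~~ (~~ (~~ x) * y)) =
               ~~ (J (pair2 (~~ x) (~~ (J (pair2 (~~ x) y)))))).

Definition tests (k : icar K) : Prop := exists l, k = ~~ l.
Definition tjoin (W : icar K -> Prop) : icar K := ~~ (~~ (J W)).
Definition tle (k l : icar K) : Prop := tjoin (pair2 k l) = l.
Definition bullet (k v : icar K) : icar K := ~~ (~~ (k * v)).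
Definition equivT (k l : icar K) : Prop :=
  forall w, tests w -> bullet k w = bullet l w.
End IDAdefs.

Definition is_IDA_mor (K1 K2 : IDAstr) (f : icar K1 -> icar K2) : Prop :=
  (forall S, f (ijoin K1 S) = ijoin K2 (imageP f S)) /\
  (forall x y, f (imul K1 x y) = imul K2 (f x) (f y)) /\
  (forall x, f (iinv K1 x) = iinv K2 (f x)) /\
  f (iunit K1) = iunit K2 /\
  (forall x, f (ineg K1 x) = ineg K2 (f x)).

Definition Psi (K : IDAstr) : OLstr :=
  {| ocar := {k : icar K | tests K k};
     ole := fun a b => tle K (proj1_sig a) (proj1_sig b);
     oc := fun a => exist (tests K) (ineg K (proj1_sig a))
                     (ex_intro _ (proj1_sig a) eq_refl) |}.

Definition Lin (M : OLstr) : IDAstr :=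
  {| icar := LinT M;
     ijoin := fun F => mkLin M (fun x => osup M x (fun y => exists f : LinT M,
                                   F f /\ y = proj1_sig f x));
     imul := fun f g => mkLin M (fun x => proj1_sig f (proj1_sig g x));
     iinv := fun f => mkLin M (adj M (proj1_sig f));
     ineg := fun f => mkLin M (fun x => sasaki M (oc M (proj1_sig f (otop M x))) x);
     iunit := mkLin M (fun x => x) |}.

Definition piL (M : OLstr) (m : ocar M) : LinT M := mkLin M (sasaki M m).

Definition nu (K : IDAstr) (k : icar K) : ocar (Psi K) -> ocar (Psi K) :=
  fun w => exist (tests K) (bullet K k (proj1_sig w))
             (ex_intro _ (ineg K (imul K k (proj1_sig w))) eq_refl).
Definition nuL (K : IDAstr) (k : icar K) : LinT (Psi K) := mkLin (Psi K) (nu K k).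

(* P(L) for an involutive submonoid L of an IDA (used with K = Lin(M));
   ~A = { ~(|_| A) }, which for Lin(M) is { pi_{(\/_{a in A} a(1))^perp} } *)
Definition Pset (K : IDAstr) (L : icar K -> Prop) : IDAstr :=
  {| icar := {x : icar K | L x} -> Prop;
     ijoin := fun S c => exists A, S A /\ A c;
     imul := fun A B c => exists a b, A a /\ B b /\
                            proj1_sig c = imul K (proj1_sig a) (proj1_sig b);
     iinv := fun A c => exists a, A a /\ proj1_sig c = iinv K (proj1_sig a);
     ineg := fun A c => proj1_sig c =
                  ineg K (ijoin K (imageP (@proj1_sig _ _) A));
     iunit := fun c => proj1_sig c = iunit K |}.

(* a "T-structure": the object part of a functor T : IDA -> IM satisfying
   (T1),(T4) is a subset T(K) of each carrier; its morphism part is restriction *)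
Definition TFun : Type := forall K : IDAstr, icar K -> Prop.

Definition Gamma (T : TFun) (M : OLstr) : IDAstr := Pset (Lin M) (T (Lin M)).

Definition singL (T : TFun) (M : OLstr) (f : LinT M) : icar (Gamma T M) :=
  fun c => proj1_sig c = f.

(* Gamma(k)(A) = { k o a o k^{-1} | a in A }, written as c o k = k o a *)
Definition Gamma_mor (T : TFun) (M N : OLstr) (k : ocar M -> ocar N)
  : icar (Gamma T M) -> icar (Gamma T N) :=
  fun A c => exists a, A a /\
     forall x, proj1_sig (proj1_sig c) (k x) = k (proj1_sig (proj1_sig a) x).

Definition T1 (T : TFun) : Prop :=
  forall K, is_IDA K ->
    (forall k, tests K k -> T K k) /\
    (forall x y, T K x -> T K y -> T K (imul K x y)) /\
    (forall x, T K x -> T K (iinv K x)) /\ T K (iunit K).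

Definition T2 (T : TFun) : Prop :=
  forall K, is_IDA K -> is_COL (Psi K) ->
    (forall s t, T K s -> T K t -> (s = t <-> equivT K s t)) ->
    (forall k, T K k -> linear (Psi K) (nu K k) /\ T (Lin (Psi K)) (nuL K k)) /\
    (forall k l, T K k -> T K l -> nuL K k = nuL K l -> k = l) /\
    (forall f, T (Lin (Psi K)) f -> exists k, T K k /\ nuL K k = f) /\
    (forall k l, T K k -> T K l ->
       nuL K (imul K k l) = imul (Lin (Psi K)) (nuL K k) (nuL K l)) /\
    nuL K (iunit K) = iunit (Lin (Psi K)) /\
    (forall k, T K k -> nuL K (iinv K k) = iinv (Lin (Psi K)) (nuL K k)).

Definition T3 (T : TFun) : Prop :=
  forall M, is_COL M ->
    (forall f, T (Lin M) f -> T (Gamma T M) (singL T M f)) /\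
    (forall f g, T (Lin M) f -> T (Lin M) g -> singL T M f = singL T M g -> f = g) /\
    (forall A, T (Gamma T M) A -> exists f, T (Lin M) f /\ A = singL T M f) /\
    (forall f g, T (Lin M) f -> T (Lin M) g ->
       singL T M (imul (Lin M) f g) = imul (Gamma T M) (singL T M f) (singL T M g)) /\
    singL T M (iunit (Lin M)) = iunit (Gamma T M) /\
    (forall f, T (Lin M) f -> singL T M (iinv (Lin M) f) = iinv (Gamma T M) (singL T M f)).

Definition T4 (T : TFun) : Prop :=
  forall K1 K2 (f : icar K1 -> icar K2), is_IDA K1 -> is_IDA K2 ->
    is_IDA_mor K1 K2 f -> forall k, T K1 k -> T K2 (f k).

Definition is_TODA (T : TFun) (K : IDAstr) : Prop :=
  is_IDA K /\
  is_COL (Psi K) /\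
  (forall A : icar K -> Prop, (forall x, T K x -> A x) ->
     (forall x y, A x -> A y -> A (imul K x y)) ->
     (forall x, A x -> A (iinv K x)) ->
     (forall S, (forall x, S x -> A x) -> A (ijoin K S)) ->
     forall x, A x) /\
  (forall S U : icar K -> Prop, (forall x, S x -> T K x) -> (forall x, U x -> T K x) ->
     (ijoin K S = ijoin K U <-> (forall x, S x <-> U x))) /\
  (forall s t, T K s -> T K t -> (s = t <-> equivT K s t)).

Definition is_TODA_mor (K1 K2 : IDAstr) (f : icar K1 -> icar K2) : Prop :=
  is_IDA_mor K1 K2 f /\ bij f.

Definition lam (T : TFun) (K : IDAstr) (k : icar K) : icar (Gamma T (Psi K)) :=
  fun c => exists S : icar K -> Prop, (forall s, S s -> T K s) /\ ijoin K S = k /\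
             exists s, S s /\ proj1_sig c = nuL K s.

From Stdlib Require Import ClassicalEpsilon ProofIrrelevance FunctionalExtensionality PropExtensionality.

(* Both categories are governed by their orthomodular lattices of tests.  In Γ(M) the
   negation sends A to {π_{(⋁_{a∈A} a(1))^⊥}}, so the tests of Γ(M) are exactly the
   singletons {π_m} and their joins are computed in M; hence μ_M : m ↦ {π_m} is an
   ortho-isomorphism.  Conjugation a ↦ k∘a∘k⁻¹ by an ortho-isomorphism k is an IDA
   isomorphism Lin(M) ≅ Lin(N) preserving 𝒯 by (T4), and Γ(k) applies it elementwise.
   In a 𝒯-based ODA K every k is the join of a unique S_k ⊆ 𝒯(K) (TODA2, TODA3), and
   λ_K(k) = ν_K[S_k].  It preserves joins, products, involution and unit because ν_K is an
   isomorphism of involutive monoids (T2), and it preserves ~ because ν_K(~k) is the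
   Sasaki projection onto (k•1)^⊥: this is the fourth IDA axiom read in Ψ(K), whose top
   is ~~e.  Uniqueness of S_k and surjectivity of ν_K make λ_K bijective. *)

Lemma pred_ext {A : Type} (P Q : A -> Prop) : (forall x, P x <-> Q x) -> P = Q.
Proof. intro H. extensionality x. apply propositional_extensionality, H. Qed.

Lemma sig_ext {A : Type} {P : A -> Prop} (a b : {x | P x}) :
  proj1_sig a = proj1_sig b -> a = b.
Proof. destruct a, b; simpl. intros ->. f_equal. apply proof_irrelevance. Qed.

Lemma pair2C {A : Type} (x y : A) : pair2 x y = pair2 y x.
Proof. apply pred_ext. intro z. unfold pair2. tauto. Qed.

Lemma imageP_pair2 {A B : Type} (f : A -> B) x y : imageP f (pair2 x y) = pair2 (f x) (f y).
Proof.
  apply pred_ext. intro z. unfold imageP, pair2. split.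
  - intros [w [[-> | ->] ->]]; auto.
  - intros [-> | ->]; eauto.
Qed.

Section Ortholattice.
Variable M : OLstr.
Hypothesis HM : is_COL M.
Local Notation le := (ole M).
Local Notation oc := (oc M).

Lemma ole_refl x : le x x. Proof. apply HM. Qed.
Lemma ole_antisym x y : le x y -> le y x -> x = y. Proof. apply HM. Qed.
Lemma ole_trans x y z : le x y -> le y z -> le x z. Proof. apply HM. Qed.
Lemma lub_exists S : exists s, is_lub M S s. Proof. apply HM. Qed.
Lemma ocK x : oc (oc x) = x. Proof. apply HM. Qed.
Lemma oc_antitone x y : le x y -> le (oc y) (oc x). Proof. apply HM. Qed.
Lemma lb_oc_bottom x z : le z x -> le z (oc x) -> forall w, le z w.
Proof. apply HM. Qed.
Lemma ub_oc_top x z : le x z -> le (oc x) z -> forall w, le w z.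
Proof. apply HM. Qed.
Lemma orthomodular x y m j :
  le x y -> is_glb M (pair2 y (oc x)) m -> is_lub M (pair2 x m) j -> j = y.
Proof. apply HM. Qed.

Lemma ole_oc x y : le (oc y) (oc x) <-> le x y.
Proof.
  split; [|apply oc_antitone]. intro H. apply oc_antitone in H. rewrite !ocK in H. exact H.
Qed.

Lemma ole_ocr x y : le x (oc y) <-> le y (oc x).
Proof. rewrite <- ole_oc, ocK. tauto. Qed.

Lemma is_lub_unique S a b : is_lub M S a -> is_lub M S b -> a = b.
Proof. intros [A1 A2] [B1 B2]. apply ole_antisym; auto. Qed.

Lemma is_glb_unique S a b : is_glb M S a -> is_glb M S b -> a = b.
Proof. intros [A1 A2] [B1 B2]. apply ole_antisym; auto. Qed.

Lemma is_lub_le_iff S s u : is_lub M S s -> (le s u <-> forall x, S x -> le x u).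
Proof. intros [H1 H2]. split; auto. intros H x Sx. eapply ole_trans; eauto. Qed.

Lemma is_lub_ext (S S' : ocar M -> Prop) s :
  (forall y, S y <-> S' y) -> is_lub M S s -> is_lub M S' s.
Proof.
  intros E [H1 H2]. split.
  - intros x Hx. apply H1, E, Hx.
  - intros u Hu. apply H2. intros x Hx. apply Hu, E, Hx.
Qed.

Lemma glb_exists S : exists s, is_glb M S s.
Proof.
  destruct (lub_exists (fun u => forall x, S x -> le u x)) as [s [H1 H2]].
  exists s. split.
  - intros x Sx. apply H2. auto.
  - intros u Hu. apply H1, Hu.
Qed.

Lemma osup_spec x0 S : is_lub M S (osup M x0 S).
Proof. unfold osup. apply epsilon_spec, lub_exists. Qed.
Lemma oinf_spec x0 S : is_glb M S (oinf M x0 S).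
Proof. unfold oinf. apply epsilon_spec, glb_exists. Qed.
Lemma osup_eq x0 S s : is_lub M S s -> osup M x0 S = s.
Proof. apply is_lub_unique, osup_spec. Qed.
Lemma oinf_eq x0 S s : is_glb M S s -> oinf M x0 S = s.
Proof. apply is_glb_unique, oinf_spec. Qed.

Definition ojoin x y := osup M x (pair2 x y).
Definition omeet x y := oinf M x (pair2 x y).

Lemma ojoin_spec x y : is_lub M (pair2 x y) (ojoin x y). Proof. apply osup_spec. Qed.
Lemma omeet_spec x y : is_glb M (pair2 x y) (omeet x y). Proof. apply oinf_spec. Qed.

Lemma ojoin_ubl x y : le x (ojoin x y). Proof. apply ojoin_spec. left; auto. Qed.
Lemma ojoin_ubr x y : le y (ojoin x y). Proof. apply ojoin_spec. right; auto. Qed.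
Lemma ojoin_least x y z : le x z -> le y z -> le (ojoin x y) z.
Proof. intros. apply ojoin_spec. intros w [-> | ->]; auto. Qed.
Lemma omeet_lbl x y : le (omeet x y) x. Proof. apply omeet_spec. left; auto. Qed.
Lemma omeet_lbr x y : le (omeet x y) y. Proof. apply omeet_spec. right; auto. Qed.
Lemma omeet_greatest x y z : le z x -> le z y -> le z (omeet x y).
Proof. intros. apply omeet_spec. intros w [-> | ->]; auto. Qed.

Lemma ojoin_eq x y s :
  le x s -> le y s -> (forall z, le x z -> le y z -> le s z) -> ojoin x y = s.
Proof.
  intros. apply ole_antisym; [apply ojoin_least; auto|]. auto using ojoin_ubl, ojoin_ubr.
Qed.
Lemma omeet_eq x y s :
  le s x -> le s y -> (forall z, le z x -> le z y -> le z s) -> omeet x y = s.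
Proof.
  intros. apply ole_antisym; [|apply omeet_greatest; auto]. auto using omeet_lbl, omeet_lbr.
Qed.

Lemma ojoin_idPr x y : le x y -> ojoin x y = y.
Proof. intro. apply ojoin_eq; auto using ole_refl. Qed.
Lemma ojoin_le_iff x y : ojoin x y = y <-> le x y.
Proof. split; [intros <-; apply ojoin_ubl|apply ojoin_idPr]. Qed.

Lemma ojoinC x y : ojoin x y = ojoin y x.
Proof. apply ojoin_eq; auto using ojoin_ubl, ojoin_ubr, ojoin_least. Qed.
Lemma omeetC x y : omeet x y = omeet y x.
Proof. apply omeet_eq; auto using omeet_lbl, omeet_lbr, omeet_greatest. Qed.

Lemma ojoin_mono a b c d : le a c -> le b d -> le (ojoin a b) (ojoin c d).
Proof.
  intros. apply ojoin_least.
  - apply ole_trans with c; auto using ojoin_ubl.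
  - apply ole_trans with d; auto using ojoin_ubr.
Qed.
Lemma omeet_mono a b c d : le a c -> le b d -> le (omeet a b) (omeet c d).
Proof.
  intros. apply omeet_greatest.
  - apply ole_trans with a; auto using omeet_lbl.
  - apply ole_trans with b; auto using omeet_lbr.
Qed.

Lemma oc_ojoin x y : oc (ojoin x y) = omeet (oc x) (oc y).
Proof.
  symmetry. apply omeet_eq.
  - apply oc_antitone, ojoin_ubl.
  - apply oc_antitone, ojoin_ubr.
  - intros z H1 H2. apply ole_ocr, ojoin_least; apply ole_ocr; auto.
Qed.
Lemma omeet_ocE x y : omeet x y = oc (ojoin (oc x) (oc y)).
Proof. rewrite oc_ojoin, !ocK. reflexivity. Qed.

Lemma oc_omeet x y : oc (omeet x y) = ojoin (oc x) (oc y).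
Proof. rewrite omeet_ocE, ocK. reflexivity. Qed.

Lemma ojoin_omeet_oc x y : le x y -> ojoin x (omeet y (oc x)) = y.
Proof. intro H. eapply orthomodular; [exact H|apply omeet_spec|apply ojoin_spec]. Qed.

Lemma omeet_ojoin_oc a m : le a m -> omeet m (ojoin a (oc m)) = a.
Proof.
  intro H. apply oc_antitone, ojoin_omeet_oc in H. rewrite ocK in H.
  assert (E : oc (omeet m (ojoin a (oc m))) = oc a)
    by (rewrite oc_omeet, oc_ojoin, ocK; exact H).
  rewrite <- (ocK (omeet _ _)), E. apply ocK.
Qed.

Lemma sasakiE m x : sasaki M m x = omeet m (ojoin (oc m) x).
Proof.
  unfold sasaki. rewrite (osup_eq _ _ _ (ojoin_spec _ _)). apply oinf_eq, omeet_spec.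
Qed.

Lemma sasaki_mono m x y : le x y -> le (sasaki M m x) (sasaki M m y).
Proof. intro. rewrite !sasakiE. apply omeet_mono, ojoin_mono; auto using ole_refl. Qed.

Lemma sasaki_le_iff m x y : le (sasaki M m x) y <-> le x (ojoin (oc m) (omeet m y)).
Proof.
  split; intro H.
  - apply ole_trans with (ojoin (oc m) (sasaki M m x)).
    + pose proof (ojoin_omeet_oc (oc m) _ (ojoin_ubl (oc m) x)) as E.
      rewrite ocK in E. rewrite sasakiE, omeetC, E. apply ojoin_ubr.
    + apply ojoin_mono; [apply ole_refl|]. apply omeet_greatest; [|exact H].
      rewrite sasakiE. apply omeet_lbl.
  - eapply ole_trans; [apply sasaki_mono, H|].
    rewrite sasakiE, ojoin_idPr by apply ojoin_ubl.
    rewrite ojoinC, omeet_ojoin_oc by apply omeet_lbl. apply omeet_lbr.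
Qed.

Lemma sasaki_adjoint m : is_adjoint M (sasaki M m) (sasaki M m).
Proof.
  intros x y. rewrite sasaki_le_iff, (sasakiE m y), oc_omeet, oc_ojoin, ocK. tauto.
Qed.

Definition is_top t := forall x, le x t.

Lemma otop_top x0 : is_top (otop M x0).
Proof. intro x. apply (osup_spec x0 (fun _ => True)). exact I. Qed.

Lemma top_exists : exists t, is_top t.
Proof. destruct (lub_exists (fun _ => True)) as [t [Ht _]]. exists t. intro x. apply Ht, I. Qed.

Lemma top_unique a b : is_top a -> is_top b -> a = b.
Proof. intros. apply ole_antisym; auto. Qed.

Lemma otopE x0 t : is_top t -> otop M x0 = t.
Proof. apply top_unique, otop_top. Qed.

Lemma sasaki_top m t : is_top t -> sasaki M m t = m.
Proof.
  intro Ht. rewrite sasakiE, (ojoin_idPr (oc m) t (Ht _)).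
  apply omeet_eq; auto using ole_refl.
Qed.

End Ortholattice.

Section LinearMaps.
Variable M : OLstr.
Hypothesis HM : is_COL M.
Local Notation le := (ole M).
Local Notation oc := (oc M).
Local Notation pr := (@proj1_sig _ _).
Local Notation LJ := (ijoin (Lin M)).
Local Notation LM := (imul (Lin M)).
Local Notation LI := (iinv (Lin M)).
Local Notation LN := (ineg (Lin M)).

Lemma is_adjoint_sym f g : is_adjoint M f g -> is_adjoint M g f.
Proof. intros H x y. rewrite (ole_ocr M HM), <- (H y x), (ole_ocr M HM). tauto. Qed.

Lemma is_adjoint_unique f g g' : is_adjoint M f g -> is_adjoint M f g' -> g = g'.
Proof.
  intros H1 H2. extensionality y. rewrite <- (ocK M HM (g y)), <- (ocK M HM (g' y)). f_equal.
  apply (ole_antisym M HM).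
  - apply H2, H1, (ole_refl M HM).
  - apply H1, H2, (ole_refl M HM).
Qed.

Lemma adjoint_le_iff f g x z : is_adjoint M f g -> (le (f x) z <-> le x (oc (g (oc z)))).
Proof. intro H. rewrite <- (H x (oc z)), (ocK M HM). tauto. Qed.

Lemma adjoint_mono f g x y : is_adjoint M f g -> le x y -> le (f x) (f y).
Proof.
  intros H Hxy. apply (adjoint_le_iff _ _ _ _ H). apply (ole_trans M HM) with y; auto.
  apply (adjoint_le_iff _ _ _ _ H), (ole_refl M HM).
Qed.

Lemma adjoint_lub f g S s : is_adjoint M f g -> is_lub M S s ->
  is_lub M (fun y => exists x, S x /\ y = f x) (f s).
Proof.
  intros H Hs. split.
  - intros y [x [Sx ->]]. eapply adjoint_mono; eauto. apply Hs, Sx.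
  - intros u Hu. apply (adjoint_le_iff _ _ _ _ H), Hs. intros x Sx.
    apply (adjoint_le_iff _ _ _ _ H), Hu. eauto.
Qed.

Lemma adj_spec f : linear M f -> is_adjoint M f (adj M f).
Proof. apply epsilon_spec. Qed.

Lemma comp_adjoint f g f' g' : is_adjoint M f g -> is_adjoint M f' g' ->
  is_adjoint M (fun x => f (f' x)) (fun y => g' (g y)).
Proof. intros H H' x y. rewrite (H (f' x) y), (H' x (g y)). tauto. Qed.

Lemma sup_adjoint (F : LinT M -> Prop) (h k : ocar M -> ocar M) :
  (forall x, is_lub M (fun y => exists f, F f /\ y = pr f x) (h x)) ->
  (forall y, is_lub M (fun z => exists f, F f /\ z = adj M (pr f) y) (k y)) ->
  is_adjoint M h k.
Proof.
  intros Hh Hk x y.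
  rewrite (is_lub_le_iff M HM _ _ _ (Hh x)), (ole_ocr M HM), (is_lub_le_iff M HM _ _ _ (Hk y)).
  split.
  - intros H z [f [Ff ->]]. apply (ole_ocr M HM), (adj_spec _ (proj2_sig f)), H. eauto.
  - intros H z [f [Ff ->]]. apply (adj_spec _ (proj2_sig f)), (ole_ocr M HM), H. eauto.
Qed.

Lemma mkLinE f : linear M f -> pr (mkLin M f) = f.
Proof. intro H. unfold mkLin. destruct excluded_middle_informative; [reflexivity|contradiction]. Qed.

Lemma Lin_mulE (f g : LinT M) : pr (LM f g) = fun x => pr f (pr g x).
Proof.
  apply mkLinE. destruct (proj2_sig f) as [a Ha], (proj2_sig g) as [b Hb].
  eexists. apply comp_adjoint; eauto.
Qed.

Lemma Lin_invE (f : LinT M) : pr (LI f) = adj M (pr f).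
Proof. apply mkLinE. exists (pr f). apply is_adjoint_sym, adj_spec, proj2_sig. Qed.

Lemma Lin_unitE : pr (iunit (Lin M)) = fun x => x.
Proof. apply mkLinE, id_linear. Qed.

Lemma Lin_join_linear F :
  linear M (fun x => osup M x (fun y => exists f : LinT M, F f /\ y = pr f x)).
Proof.
  exists (fun y => osup M y (fun z => exists f, F f /\ z = adj M (pr f) y)).
  apply (sup_adjoint F); intros; apply (osup_spec M HM).
Qed.

Lemma Lin_join_spec F x : is_lub M (fun y => exists f, F f /\ y = pr f x) (pr (LJ F) x).
Proof. simpl. rewrite mkLinE by apply Lin_join_linear. apply (osup_spec M HM). Qed.

Lemma Lin_join_eq F x s : is_lub M (fun y => exists f, F f /\ y = pr f x) s -> pr (LJ F) x = s.
Proof. apply (is_lub_unique M HM), Lin_join_spec. Qed.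

Lemma Lin_join2E f g x : pr (LJ (pair2 f g)) x = ojoin M (pr f x) (pr g x).
Proof.
  apply Lin_join_eq. eapply (is_lub_ext M); [|apply (ojoin_spec M HM)]. intro z. split.
  - intros [-> | ->]; [exists f|exists g]; split; unfold pair2; auto.
  - intros [h [[-> | ->] ->]]; [left|right]; auto.
Qed.

Lemma ile_Lin (f g : LinT M) : ile (Lin M) f g <-> forall x, le (pr f x) (pr g x).
Proof.
  unfold ile. split.
  - intros H x. rewrite <- H, Lin_join2E. apply (ojoin_ubl M HM).
  - intro H. apply sig_ext. extensionality x. rewrite Lin_join2E. apply (ojoin_idPr M HM), H.
Qed.

Lemma piLE m : pr (piL M m) = sasaki M m.
Proof. apply mkLinE. exists (sasaki M m). apply (sasaki_adjoint M HM). Qed.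

Lemma piL_top m t : is_top M t -> pr (piL M m) t = m.
Proof. intro Ht. rewrite piLE. apply (sasaki_top M HM), Ht. Qed.

Lemma piL_inj m n : piL M m = piL M n -> m = n.
Proof.
  intro E. destruct (top_exists M HM) as [t Ht].
  rewrite <- (piL_top m t Ht), <- (piL_top n t Ht), E. reflexivity.
Qed.

Lemma Lin_neg_piL (f : LinT M) t : is_top M t -> LN f = piL M (oc (pr f t)).
Proof.
  intro Ht.
  assert (E : (fun x => sasaki M (oc (pr f (otop M x))) x) = sasaki M (oc (pr f t))).
  { extensionality x. rewrite (otopE M HM x t Ht). reflexivity. }
  apply sig_ext. rewrite piLE. simpl. rewrite E. apply mkLinE.
  exists (sasaki M (oc (pr f t))). apply (sasaki_adjoint M HM).
Qed.

Lemma Lin_negE (f : LinT M) t : is_top M t -> pr (LN f) = sasaki M (oc (pr f t)).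
Proof. intro Ht. rewrite (Lin_neg_piL f t Ht). apply piLE. Qed.

Lemma Lin_neg_top (f : LinT M) t : is_top M t -> pr (LN f) t = oc (pr f t).
Proof. intro Ht. rewrite (Lin_negE f t Ht). apply (sasaki_top M HM), Ht. Qed.

Lemma Lin_negnegE (f : LinT M) t : is_top M t -> pr (LN (LN f)) = sasaki M (pr f t).
Proof. intro Ht. rewrite (Lin_negE _ t Ht), (Lin_neg_top _ t Ht), (ocK M HM). reflexivity. Qed.

Lemma Lin_neg_piL_oc m : LN (piL M m) = piL M (oc m).
Proof.
  destruct (top_exists M HM) as [t Ht]. rewrite (Lin_neg_piL _ t Ht), piL_top; auto.
Qed.

Lemma Lin_mulJr (f : LinT M) S : LM f (LJ S) = LJ (imageP (fun g => LM f g) S).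
Proof.
  apply sig_ext. extensionality z. rewrite Lin_mulE. symmetry. apply Lin_join_eq.
  destruct (proj2_sig f) as [g Hg].
  eapply (is_lub_ext M); [|apply (adjoint_lub _ _ _ _ Hg (Lin_join_spec S z))].
  intro y. split.
  - intros [w [[h [Sh ->]] ->]]. exists (LM f h). split; [exists h; auto|].
    rewrite Lin_mulE. reflexivity.
  - intros [h [[h' [Sh' ->]] ->]]. rewrite Lin_mulE. exists (pr h' z). split; eauto.
Qed.

Lemma Lin_mulJl S (g : LinT M) : LM (LJ S) g = LJ (imageP (fun f => LM f g) S).
Proof.
  apply sig_ext. extensionality z. rewrite Lin_mulE. symmetry. apply Lin_join_eq.
  eapply (is_lub_ext M); [|apply Lin_join_spec]. intro w. split.
  - intros [f [Sf ->]]. exists (LM f g). split; [exists f; auto|]. rewrite Lin_mulE. reflexivity.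
  - intros [h [[f [Sf ->]] ->]]. rewrite Lin_mulE. eauto.
Qed.

Lemma Lin_invK (f : LinT M) : LI (LI f) = f.
Proof.
  apply sig_ext. rewrite !Lin_invE. eapply is_adjoint_unique.
  - apply adj_spec. exists (pr f). apply is_adjoint_sym, adj_spec, proj2_sig.
  - apply is_adjoint_sym, adj_spec, proj2_sig.
Qed.

Lemma Lin_invM (f g : LinT M) : LI (LM f g) = LM (LI g) (LI f).
Proof.
  apply sig_ext. rewrite Lin_mulE, !Lin_invE, Lin_mulE. eapply is_adjoint_unique.
  - apply adj_spec. eexists. apply comp_adjoint; apply adj_spec, proj2_sig.
  - apply comp_adjoint; apply adj_spec, proj2_sig.
Qed.

Lemma Lin_invJ S : LI (LJ S) = LJ (imageP LI S).
Proof.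
  apply sig_ext. rewrite Lin_invE. eapply is_adjoint_unique.
  - apply adj_spec, proj2_sig.
  - apply (sup_adjoint S); [apply Lin_join_spec|]. intro y.
    eapply (is_lub_ext M); [|apply Lin_join_spec]. intro z. split.
    + intros [h [[f [Sf ->]] ->]]. rewrite Lin_invE. eauto.
    + intros [f [Sf ->]]. exists (LI f). split; [exists f; auto|]. rewrite Lin_invE. reflexivity.
Qed.

Lemma Lin_IQuantale : is_IQuantale (Lin M).
Proof.
  repeat split.
  - intro f. apply ile_Lin. intro. apply (ole_refl M HM).
  - intros f g H1 H2. rewrite ile_Lin in H1, H2. apply sig_ext. extensionality z.
    apply (ole_antisym M HM); auto.
  - intros f g h H1 H2. rewrite ile_Lin in H1, H2 |- *. intro z.
    eapply (ole_trans M HM); [apply H1|apply H2].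
  - intros S f Sf. apply ile_Lin. intro z. apply Lin_join_spec. eauto.
  - intros S u H. apply ile_Lin. intro z. apply Lin_join_spec. intros y [f [Sf ->]].
    apply ile_Lin, H, Sf.
  - intros f g h. apply sig_ext. rewrite !Lin_mulE. reflexivity.
  - intro f. apply sig_ext. rewrite Lin_mulE, Lin_unitE. reflexivity.
  - intro f. apply sig_ext. rewrite Lin_mulE, Lin_unitE. reflexivity.
  - apply Lin_mulJr.
  - apply Lin_mulJl.
  - apply Lin_invK.
  - apply Lin_invM.
  - apply Lin_invJ.
Qed.

Section NegationAxioms.
Variable t : ocar M.
Hypothesis Ht : is_top M t.

Lemma Lin_neg_mul_negneg (f g : LinT M) : LN (LM f (LN (LN g))) = LN (LM f g).
Proof.
  apply sig_ext. rewrite !(Lin_negE _ t Ht), !Lin_mulE, (Lin_negnegE g t Ht).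
  rewrite (sasaki_top M HM); auto.
Qed.

Lemma Lin_neg_join_negneg S : LN (LJ (imageP (fun f => LN (LN f)) S)) = LN (LJ S).
Proof.
  apply sig_ext. rewrite !(Lin_negE _ t Ht). do 2 f_equal.
  apply Lin_join_eq. eapply (is_lub_ext M); [|apply Lin_join_spec]. intro z. split.
  - intros [f [Sf ->]]. exists (LN (LN f)). split; [exists f; auto|].
    rewrite (Lin_negnegE f t Ht), (sasaki_top M HM); auto.
  - intros [h [[f [Sf ->]] ->]]. rewrite (Lin_negnegE f t Ht), (sasaki_top M HM); eauto.
Qed.

Lemma Lin_inv_neg (f : LinT M) : LI (LN f) = LN f.
Proof.
  apply sig_ext. rewrite Lin_invE, (Lin_negE _ t Ht). eapply is_adjoint_unique.
  - apply adj_spec. eexists. apply (sasaki_adjoint M HM).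
  - apply (sasaki_adjoint M HM).
Qed.

Lemma Lin_negneg_mul (f g : LinT M) :
  LN (LN (LM (LN (LN f)) g)) = LN (LJ (pair2 (LN f) (LN (LJ (pair2 (LN f) g))))).
Proof.
  apply sig_ext.
  rewrite (Lin_negnegE _ t Ht), (Lin_negE _ t Ht), Lin_mulE, (Lin_negnegE _ t Ht).
  rewrite !Lin_join2E, !(Lin_neg_top _ t Ht), Lin_join2E, (Lin_neg_top _ t Ht).
  rewrite (oc_ojoin M HM), !(ocK M HM), (sasakiE M HM (pr f t)). reflexivity.
Qed.

End NegationAxioms.

Lemma Lin_IDA : is_IDA (Lin M).
Proof.
  destruct (top_exists M HM) as [t Ht].
  split; [apply Lin_IQuantale|]. repeat split.
  - apply (Lin_neg_mul_negneg t Ht).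
  - apply (Lin_neg_join_negneg t Ht).
  - apply (Lin_inv_neg t Ht).
  - apply (Lin_negneg_mul t Ht).
Qed.

End LinearMaps.

Lemma imageP_comp {A B C : Type} (f : B -> C) (g : A -> B) S :
  imageP f (imageP g S) = imageP (fun x => f (g x)) S.
Proof.
  apply pred_ext. intro z. unfold imageP. split.
  - intros [y [[x [Sx ->]] ->]]. eauto.
  - intros [x [Sx ->]]. eauto.
Qed.

Section IDATheory.
Variable K : IDAstr.
Hypothesis HK : is_IDA K.
Local Notation J := (ijoin K).
Local Notation "x * y" := (imul K x y).
Local Notation "~~ x" := (ineg K x) (at level 35, right associativity).
Local Notation le := (ile K).

Ltac ida_axiom := destruct HK as [HQ HN]; unfold is_IQuantale in HQ;
  decompose record HQ; decompose record HN; eauto.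

Lemma ile_refl x : le x x. Proof. ida_axiom. Qed.
Lemma ile_antisym x y : le x y -> le y x -> x = y. Proof. ida_axiom. Qed.
Lemma ile_trans x y z : le x y -> le y z -> le x z. Proof. ida_axiom. Qed.
Lemma ijoin_ub S x : S x -> le x (J S). Proof. ida_axiom. Qed.
Lemma ijoin_least S u : (forall x, S x -> le x u) -> le (J S) u. Proof. ida_axiom. Qed.
Lemma imulA x y z : (x * y) * z = x * (y * z). Proof. ida_axiom. Qed.
Lemma imul1l x : iunit K * x = x. Proof. ida_axiom. Qed.
Lemma imul1r x : x * iunit K = x. Proof. ida_axiom. Qed.
Lemma imulJr x S : x * J S = J (imageP (fun y => x * y) S). Proof. ida_axiom. Qed.
Lemma imulJl S y : J S * y = J (imageP (fun x => x * y) S). Proof. ida_axiom. Qed.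
Lemma iinvK x : iinv K (iinv K x) = x. Proof. ida_axiom. Qed.
Lemma iinvM x y : iinv K (x * y) = iinv K y * iinv K x. Proof. ida_axiom. Qed.
Lemma iinvJ S : iinv K (J S) = J (imageP (iinv K) S). Proof. ida_axiom. Qed.
Lemma ineg_mul_negneg x y : ~~ (x * ~~ ~~ y) = ~~ (x * y). Proof. ida_axiom. Qed.
Lemma ineg_join_negneg S : ~~ J (imageP (fun x => ~~ ~~ x) S) = ~~ J S. Proof. ida_axiom. Qed.
Lemma iinv_neg x : iinv K (~~ x) = ~~ x. Proof. ida_axiom. Qed.
Lemma inegneg_mul x y :
  ~~ ~~ (~~ ~~ x * y) = ~~ J (pair2 (~~ x) (~~ J (pair2 (~~ x) y))).
Proof. ida_axiom. Qed.

Lemma ijoin_eq S s :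
  (forall x, S x -> le x s) -> (forall u, (forall x, S x -> le x u) -> le s u) -> J S = s.
Proof.
  intros H1 H2. apply ile_antisym; [apply ijoin_least; auto|].
  apply H2. intros. apply ijoin_ub; auto.
Qed.

Lemma ijoin1 x : J (fun c => c = x) = x.
Proof. apply ijoin_eq; [intros c ->; apply ile_refl|]. intros u H. apply H. reflexivity. Qed.

Lemma ijoin_flatten (I : Type) (P : I -> Prop) (Q : I -> icar K -> Prop) :
  J (fun y => exists i, P i /\ Q i y) = J (fun y => exists i, P i /\ y = J (Q i)).
Proof.
  apply ile_antisym; apply ijoin_least.
  - intros x [i [Pi Qx]]. apply ile_trans with (J (Q i)); apply ijoin_ub; eauto.
  - intros x [i [Pi ->]]. apply ijoin_least. intros y Qy. apply ijoin_ub. eauto.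
Qed.

Lemma ineg3 x : ~~ ~~ ~~ x = ~~ x.
Proof.
  pose proof (ineg_join_negneg (fun c => c = x)) as H.
  assert (E : imageP (fun x => ~~ ~~ x) (fun c => c = x) = fun c => c = ~~ ~~ x).
  { apply pred_ext. intro c. unfold imageP. split; [intros [y [-> ->]]; auto|intros ->; eauto]. }
  rewrite E, !ijoin1 in H. exact H.
Qed.

Lemma ijoin_mul S U : J S * J U = J (fun c => exists s u, S s /\ U u /\ c = s * u).
Proof.
  transitivity (J (fun c => exists s, S s /\ (fun s c => exists u, U u /\ c = s * u) s c)).
  - rewrite ijoin_flatten, imulJl. f_equal. apply pred_ext. intro c. unfold imageP.
    split; intros [s [Ss ->]]; exists s; rewrite imulJr; auto.
  - f_equal. apply pred_ext. intro c. split.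
    + intros [s [Ss [u [Uu ->]]]]. eauto.
    + intros [s [u [Ss [Uu ->]]]]. eauto.
Qed.

Lemma ijoin_pair2_distr W u :
  J (pair2 (J W) u) = J (fun y => y = u \/ exists a, W a /\ y = J (pair2 a u)).
Proof.
  apply ile_antisym; apply ijoin_least.
  - intros x [-> | ->].
    + apply ijoin_least. intros a Wa. apply ile_trans with (J (pair2 a u)).
      * apply ijoin_ub. left. reflexivity.
      * apply ijoin_ub. right. eauto.
    + apply ijoin_ub. left. reflexivity.
  - intros x [-> | [a [Wa ->]]].
    + apply ijoin_ub. right. reflexivity.
    + apply ijoin_least. intros z [-> | ->].
      * apply ile_trans with (J W); apply ijoin_ub; [exact Wa|left; reflexivity].
      * apply ijoin_ub. right. reflexivity.
Qed.

End IDATheory.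

Section PowerSet.
Variable K : IDAstr.
Hypothesis HK : is_IDA K.
Variable L : icar K -> Prop.
Hypothesis L_tests : forall k, tests K k -> L k.
Hypothesis L_mul : forall x y, L x -> L y -> L (imul K x y).
Hypothesis L_inv : forall x, L x -> L (iinv K x).
Hypothesis L_unit : L (iunit K).
Local Notation J := (ijoin K).
Local Notation "x * y" := (imul K x y).
Local Notation "~~ x" := (ineg K x) (at level 35, right associativity).
Local Notation P := (Pset K L).
Local Notation pr := (@proj1_sig _ _).

Definition Pelems (A : icar P) : icar K -> Prop := imageP pr A.
Definition Psingle (z : icar K) : icar P := fun c => pr c = z.
Definition Pflat (A : icar P) : icar K := J (Pelems A).

Definition Lmul (a b : {x | L x}) : {x | L x} := exist L _ (L_mul _ _ (proj2_sig a) (proj2_sig b)).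
Definition Linv (a : {x | L x}) : {x | L x} := exist L _ (L_inv _ (proj2_sig a)).
Definition Lunit : {x | L x} := exist L _ L_unit.

Lemma Pelems_single z : L z -> Pelems (Psingle z) = fun c => c = z.
Proof.
  intro Lz. apply pred_ext. intro c. unfold Pelems, Psingle, imageP. split.
  - intros [y [Hy ->]]. exact Hy.
  - intros ->. exists (exist _ z Lz). auto.
Qed.

Lemma Pflat_single z : L z -> Pflat (Psingle z) = z.
Proof. intro Lz. unfold Pflat. rewrite Pelems_single by exact Lz. apply ijoin1, HK. Qed.

Lemma Pset_negE A : ineg P A = Psingle (~~ Pflat A).
Proof. reflexivity. Qed.

Lemma Pflat_neg A : Pflat (ineg P A) = ~~ Pflat A.
Proof. apply Pflat_single, L_tests. eexists. reflexivity. Qed.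

Lemma Pset_neg_congr A B : ~~ Pflat A = ~~ Pflat B -> ineg P A = ineg P B.
Proof. intro E. rewrite !Pset_negE, E. reflexivity. Qed.

Lemma Pflat_mul A B : Pflat (imul P A B) = Pflat A * Pflat B.
Proof.
  unfold Pflat. rewrite (ijoin_mul K HK). f_equal. apply pred_ext. intro y.
  unfold Pelems, imageP. simpl. split.
  - intros [c [[a [b [Aa [Bb E]]]] ->]]. exists (pr a), (pr b). repeat split; eauto.
  - intros [a [b [[a' [Aa ->]] [[b' [Bb ->]] ->]]]]. exists (Lmul a' b'). split; [exists a', b'|]; auto.
Qed.

Lemma Pflat_join S : Pflat (ijoin P S) = J (imageP Pflat S).
Proof.
  unfold Pflat. unfold imageP at 1. rewrite <- (ijoin_flatten K HK _ S Pelems). f_equal.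
  apply pred_ext. intro y. unfold Pelems, imageP. simpl. split.
  - intros [c [[A [SA Ac]] ->]]. eauto.
  - intros [A [SA [c [Ac ->]]]]. eauto.
Qed.

Lemma Pflat_join2 A B : Pflat (ijoin P (pair2 A B)) = J (pair2 (Pflat A) (Pflat B)).
Proof. rewrite Pflat_join, imageP_pair2. reflexivity. Qed.

Lemma ile_Pset A B : ile P A B <-> forall c, A c -> B c.
Proof.
  unfold ile. simpl. split.
  - intros H c Ac. rewrite <- H. exists A. split; [left|]; auto.
  - intro H. apply pred_ext. intro c. split.
    + intros [X [[-> | ->] Xc]]; auto.
    + intro Bc. exists B. split; [right|]; auto.
Qed.

Lemma Pset_mulA A B C : imul P (imul P A B) C = imul P A (imul P B C).
Proof.
  apply pred_ext. intro c. simpl. split.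
  - intros [d [c' [[a [b [Aa [Bb E1]]]] [Cc E2]]]].
    exists a, (Lmul b c'). repeat split; [auto|exists b, c'; auto|].
    simpl. rewrite E2, E1. apply (imulA K HK).
  - intros [a [d [Aa [[b [c' [Bb [Cc E1]]]] E2]]]].
    exists (Lmul a b), c'. repeat split; [exists a, b; auto|auto|].
    simpl. rewrite E2, E1. symmetry. apply (imulA K HK).
Qed.

Lemma Pset_mul1l A : imul P (iunit P) A = A.
Proof.
  apply pred_ext. intro c. simpl. split.
  - intros [a [b [Ea [Ab E]]]]. rewrite Ea, (imul1l K HK) in E.
    rewrite (sig_ext c b E). exact Ab.
  - intro Ac. exists Lunit, c. simpl. repeat split; auto. symmetry. apply (imul1l K HK).
Qed.

Lemma Pset_mul1r A : imul P A (iunit P) = A.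
Proof.
  apply pred_ext. intro c. simpl. split.
  - intros [a [b [Aa [Eb E]]]]. rewrite Eb, (imul1r K HK) in E.
    rewrite (sig_ext c a E). exact Aa.
  - intro Ac. exists c, Lunit. simpl. repeat split; auto. symmetry. apply (imul1r K HK).
Qed.

Lemma Pset_mulJr A S : imul P A (ijoin P S) = ijoin P (imageP (fun B => imul P A B) S).
Proof.
  apply pred_ext. intro c. simpl. unfold imageP. split.
  - intros [a [b [Aa [[B [SB Bb]] E]]]]. exists (imul P A B). split; [eauto|]. simpl. eauto.
  - intros [C [[B [SB ->]] [a [b [Aa [Bb E]]]]]]. exists a, b. eauto.
Qed.

Lemma Pset_mulJl S B : imul P (ijoin P S) B = ijoin P (imageP (fun A => imul P A B) S).
Proof.
  apply pred_ext. intro c. simpl. unfold imageP. split.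
  - intros [a [b [[A [SA Aa]] [Bb E]]]]. exists (imul P A B). split; [eauto|]. simpl. eauto.
  - intros [C [[A [SA ->]] [a [b [Aa [Bb E]]]]]]. exists a, b. eauto.
Qed.

Lemma Pset_invK A : iinv P (iinv P A) = A.
Proof.
  apply pred_ext. intro c. simpl. split.
  - intros [a [[b [Ab Ea]] Ec]]. rewrite Ea, (iinvK K HK) in Ec.
    rewrite (sig_ext c b Ec). exact Ab.
  - intro Ac. exists (Linv c). simpl. split; [eauto|]. rewrite (iinvK K HK). reflexivity.
Qed.

Lemma Pset_invM A B : iinv P (imul P A B) = imul P (iinv P B) (iinv P A).
Proof.
  apply pred_ext. intro c. simpl. split.
  - intros [d [[a [b [Aa [Bb E1]]]] E2]]. exists (Linv b), (Linv a). simpl.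
    repeat split; eauto. rewrite E2, E1. apply (iinvM K HK).
  - intros [b [a [[b' [Bb E1]] [[a' [Aa E2]] E3]]]]. exists (Lmul a' b'). simpl.
    split; [exists a', b'; auto|]. rewrite E3, E1, E2, (iinvM K HK). reflexivity.
Qed.

Lemma Pset_invJ S : iinv P (ijoin P S) = ijoin P (imageP (iinv P) S).
Proof.
  apply pred_ext. intro c. simpl. unfold imageP. split.
  - intros [a [[A [SA Aa]] E]]. exists (iinv P A). split; [eauto|]. simpl. eauto.
  - intros [B [[A [SA ->]] [a [Aa E]]]]. simpl. eauto.
Qed.

Lemma Pset_IQuantale : is_IQuantale P.
Proof.
  repeat split.
  - intro A. apply ile_Pset. auto.
  - intros A B H1 H2. rewrite ile_Pset in H1, H2. apply pred_ext. split; auto.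
  - intros A B C H1 H2. rewrite ile_Pset in H1, H2 |- *. auto.
  - intros S A SA. apply ile_Pset. intros c Ac. simpl. eauto.
  - intros S U H. apply ile_Pset. intros c [A [SA Ac]]. apply (proj1 (ile_Pset _ _) (H A SA)), Ac.
  - apply Pset_mulA.
  - apply Pset_mul1l.
  - apply Pset_mul1r.
  - apply Pset_mulJr.
  - apply Pset_mulJl.
  - apply Pset_invK.
  - apply Pset_invM.
  - apply Pset_invJ.
Qed.

(* [Pflat] commutes with all operations and [ineg P] factors through it, so the
   negation axioms of P(L) are those of K read through [Pflat]. *)
Lemma Pset_IDA : is_IDA P.
Proof.
  split; [apply Pset_IQuantale|]. repeat split.
  - intros A B. apply Pset_neg_congr.
    rewrite !Pflat_mul, !Pflat_neg. apply (ineg_mul_negneg K HK).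
  - intro S. apply Pset_neg_congr. rewrite !Pflat_join, imageP_comp.
    rewrite <- (ineg_join_negneg K HK (imageP Pflat S)), imageP_comp.
    do 3 f_equal. extensionality A. rewrite !Pflat_neg. reflexivity.
  - intro A. apply pred_ext. intro c. rewrite Pset_negE. simpl. unfold Psingle. split.
    + intros [a [Ea Ec]]. rewrite Ec, Ea. apply (iinv_neg K HK).
    + intro Ec. exists (exist L _ (L_tests _ (ex_intro _ (Pflat A) eq_refl))). simpl.
      split; [reflexivity|]. rewrite Ec. symmetry. apply (iinv_neg K HK).
  - intros A B. apply Pset_neg_congr.
    rewrite !Pflat_neg, !Pflat_join2, Pflat_mul, !Pflat_neg, Pflat_join2, !Pflat_neg.
    apply (inegneg_mul K HK).
Qed.

End PowerSet.

Section OrthoIso.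
Variables M N : OLstr.
Variable g : ocar M -> ocar N.
Hypothesis Hg : is_COL_mor M N g.

Lemma iso_inj x y : g x = g y -> x = y. Proof. apply Hg. Qed.
Lemma iso_surj y : exists x, g x = y. Proof. apply Hg. Qed.
Lemma iso_le x y : ole M x y <-> ole N (g x) (g y). Proof. apply Hg. Qed.
Lemma iso_oc x : g (oc M x) = oc N (g x). Proof. apply Hg. Qed.

Lemma iso_pair2 a b : (fun z => pair2 (g a) (g b) (g z)) = pair2 a b.
Proof.
  apply pred_ext. intro z. unfold pair2.
  split; intros [E|E]; [left|right|left|right]; subst; auto using iso_inj.
Qed.

Lemma iso_lub S s : is_lub N S (g s) <-> is_lub M (fun x => S (g x)) s.
Proof.
  split; intros [H1 H2]; split.
  - intros x Sx. apply iso_le, H1, Sx.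
  - intros u Hu. apply iso_le, H2. intros y Sy. destruct (iso_surj y) as [x <-].
    apply iso_le, Hu, Sy.
  - intros y Sy. destruct (iso_surj y) as [x <-]. apply iso_le, H1, Sy.
  - intros u Hu. destruct (iso_surj u) as [v <-]. apply iso_le, H2. intros x Sx.
    apply iso_le, Hu, Sx.
Qed.

Lemma iso_glb S s : is_glb N S (g s) <-> is_glb M (fun x => S (g x)) s.
Proof.
  split; intros [H1 H2]; split.
  - intros x Sx. apply iso_le, H1, Sx.
  - intros u Hu. apply iso_le, H2. intros y Sy. destruct (iso_surj y) as [x <-].
    apply iso_le, Hu, Sy.
  - intros y Sy. destruct (iso_surj y) as [x <-]. apply iso_le, H1, Sy.
  - intros u Hu. destruct (iso_surj u) as [v <-]. apply iso_le, H2. intros x Sx.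
    apply iso_le, Hu, Sx.
Qed.

Ltac intros_in_image :=
  repeat match goal with
  | |- forall a : ocar N, _ => let a' := fresh a in intro a'; destruct (iso_surj a') as [? <-]
  | |- forall S : ocar N -> Prop, _ => intro
  end.

Lemma is_COL_transport : is_COL M -> is_COL N.
Proof.
  intro HM. repeat split; intros_in_image; rewrite <- ?iso_oc.
  - apply iso_le, (ole_refl M HM).
  - rewrite <- !iso_le. intros H1 H2. f_equal. apply (ole_antisym M HM); auto.
  - rewrite <- !iso_le. apply (ole_trans M HM).
  - destruct (lub_exists M HM (fun x => S (g x))) as [s Hs].
    exists (g s). apply iso_lub, Hs.
  - rewrite (ocK M HM). reflexivity.
  - rewrite <- !iso_le. apply (oc_antitone M HM).
  - rewrite <- !iso_le. intros H1 H2. intros_in_image. apply iso_le.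
    apply (lb_oc_bottom M HM _ _ H1 H2).
  - rewrite <- !iso_le. intros H1 H2. intros_in_image. apply iso_le.
    apply (ub_oc_top M HM _ _ H1 H2).
  - rewrite <- !iso_le, iso_glb, iso_lub, !iso_pair2. intros H1 H2 H3.
    f_equal. eapply (orthomodular M HM); eauto.
Qed.

End OrthoIso.

Section GammaObject.
Variable T : TFun.
Hypothesis HT1 : T1 T.
Hypothesis HT3 : T3 T.
Variable M : OLstr.
Hypothesis HM : is_COL M.
Local Notation L := (T (Lin M)).
Local Notation G := (Gamma T M).
Local Notation pr := (@proj1_sig _ _).
Local Notation sg := (singL T M).

Lemma T_Lin_tests k : tests (Lin M) k -> L k. Proof. apply (HT1 _ (Lin_IDA M HM)). Qed.
Lemma T_Lin_mul f g : L f -> L g -> L (imul (Lin M) f g). Proof. apply (HT1 _ (Lin_IDA M HM)). Qed.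
Lemma T_Lin_inv f : L f -> L (iinv (Lin M) f). Proof. apply (HT1 _ (Lin_IDA M HM)). Qed.
Lemma T_Lin_unit : L (iunit (Lin M)). Proof. apply (HT1 _ (Lin_IDA M HM)). Qed.

Lemma Gamma_IDA : is_IDA G.
Proof. exact (Pset_IDA _ (Lin_IDA M HM) L T_Lin_tests T_Lin_mul T_Lin_inv T_Lin_unit). Qed.

Lemma piL_tests m : tests (Lin M) (piL M m).
Proof. exists (piL M (oc M m)). rewrite (Lin_neg_piL_oc M HM), (ocK M HM). reflexivity. Qed.

Lemma piL_T m : L (piL M m). Proof. apply T_Lin_tests, piL_tests. Qed.

Lemma Gamma_T_single f : L f -> T G (sg f). Proof. apply (HT3 M HM). Qed.
Lemma Gamma_T_elim A : T G A -> exists f, L f /\ A = sg f. Proof. apply (HT3 M HM). Qed.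

Lemma singL_inj f g : L f -> sg f = sg g -> f = g.
Proof.
  intros Lf E. assert (H : sg f (exist _ f Lf)) by reflexivity.
  rewrite E in H. exact H.
Qed.

Lemma Pflat_singL f : L f -> Pflat (Lin M) L (sg f) = f.
Proof. apply (Pflat_single _ (Lin_IDA M HM)). Qed.

Lemma Gamma_negE A t : is_top M t -> ineg G A = sg (piL M (oc M (pr (Pflat (Lin M) L A) t))).
Proof. intro Ht. unfold Gamma. rewrite Pset_negE, (Lin_neg_piL M HM _ t Ht). reflexivity. Qed.

Lemma Gamma_neg_piL m : ineg G (sg (piL M m)) = sg (piL M (oc M m)).
Proof.
  destruct (top_exists M HM) as [t Ht].
  rewrite (Gamma_negE _ t Ht), Pflat_singL, (piL_top M HM _ t Ht) by apply piL_T. reflexivity.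
Qed.

Lemma singL_piL_tests m : tests G (sg (piL M m)).
Proof. exists (sg (piL M (oc M m))). rewrite Gamma_neg_piL, (ocK M HM). reflexivity. Qed.

Lemma Gamma_tests A : tests G A -> exists m, A = sg (piL M m).
Proof.
  intros [B ->]. destruct (top_exists M HM) as [t Ht]. rewrite (Gamma_negE _ t Ht). eauto.
Qed.

Lemma Gamma_tjoin_piL m n : tjoin G (pair2 (sg (piL M m)) (sg (piL M n))) = sg (piL M (ojoin M m n)).
Proof.
  destruct (top_exists M HM) as [t Ht].
  assert (E : ineg G (ijoin G (pair2 (sg (piL M m)) (sg (piL M n))))
              = sg (piL M (oc M (ojoin M m n)))).
  { rewrite (Gamma_negE _ t Ht). unfold Gamma.
    rewrite (Pflat_join2 _ (Lin_IDA M HM)), !Pflat_singL, (Lin_join2E M HM),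
      !(piL_top M HM _ t Ht) by apply piL_T.
    reflexivity. }
  unfold tjoin. rewrite E, Gamma_neg_piL, (ocK M HM). reflexivity.
Qed.

Definition muG (m : ocar M) : ocar (Psi G) := exist (tests G) (sg (piL M m)) (singL_piL_tests m).

Lemma muG_iso : is_COL_mor M (Psi G) muG.
Proof.
  split; [split|split].
  - intros m n E. apply (f_equal pr) in E. apply singL_inj, (piL_inj M HM) in E; auto using piL_T.
  - intros [A HA]. destruct (Gamma_tests A HA) as [m ->]. exists m. apply sig_ext. reflexivity.
  - intros m n. simpl. unfold tle. rewrite Gamma_tjoin_piL, <- (ojoin_le_iff M HM). split.
    + intros ->. reflexivity.
    + intros E. apply singL_inj, (piL_inj M HM) in E; auto using piL_T.
  - intro m. apply sig_ext. simpl. symmetry. apply Gamma_neg_piL.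
Qed.

Lemma Gamma_bullet_piL f m : L f -> bullet G (sg f) (sg (piL M m)) = sg (piL M (pr f m)).
Proof.
  intro Lf. destruct (top_exists M HM) as [t Ht].
  assert (E : ineg G (imul G (sg f) (sg (piL M m))) = sg (piL M (oc M (pr f m)))).
  { rewrite (Gamma_negE _ t Ht). unfold Gamma.
    rewrite (Pflat_mul _ (Lin_IDA M HM) L T_Lin_mul), !Pflat_singL by auto using piL_T.
    rewrite (Lin_mulE M), (piL_top M HM _ t Ht). reflexivity. }
  unfold bullet. rewrite E, Gamma_neg_piL, (ocK M HM). reflexivity.
Qed.

Lemma Gamma_join_singles A : A = ijoin G (fun B => exists c, A c /\ B = sg (pr c)).
Proof.
  apply pred_ext. intro c. simpl. split.
  - intro Ac. exists (sg (pr c)). split; [eauto|reflexivity].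
  - intros [B [[c' [Ac' ->]] E]]. rewrite (sig_ext c c' E). exact Ac'.
Qed.

Lemma Gamma_generated (A : icar G -> Prop) :
  (forall x, T G x -> A x) -> (forall S, (forall x, S x -> A x) -> A (ijoin G S)) ->
  forall x, A x.
Proof.
  intros HT HJ B. rewrite (Gamma_join_singles B). apply HJ.
  intros C [c [_ ->]]. apply HT, Gamma_T_single, proj2_sig.
Qed.

Lemma Gamma_join_incl (S U : icar G -> Prop) : (forall x, S x -> T G x) ->
  ijoin G S = ijoin G U -> (forall x, U x -> T G x) -> forall x, S x -> U x.
Proof.
  intros HS E HU B SB. destruct (Gamma_T_elim B (HS B SB)) as [f [Lf ->]].
  assert (H : ijoin G S (exist _ f Lf)) by (exists (sg f); split; auto; reflexivity).
  rewrite E in H. destruct H as [B' [UB' B'f]].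
  destruct (Gamma_T_elim B' (HU B' UB')) as [f' [Lf' ->]].
  change (f = f') in B'f. subst f'. exact UB'.
Qed.

Lemma Gamma_separated s t : T G s -> T G t -> equivT G s t -> s = t.
Proof.
  intros Ts Tt Heq.
  destruct (Gamma_T_elim s Ts) as [f [Lf ->]], (Gamma_T_elim t Tt) as [g [Lg ->]].
  f_equal. apply sig_ext. extensionality m.
  specialize (Heq _ (singL_piL_tests m)). rewrite !Gamma_bullet_piL in Heq by auto.
  apply (piL_inj M HM), singL_inj, Heq. apply piL_T.
Qed.

Lemma Gamma_TODA : is_TODA T G.
Proof.
  split; [apply Gamma_IDA|]. split; [exact (is_COL_transport _ _ _ muG_iso HM)|]. split.
  { intros A HT _ _ HJ. apply Gamma_generated; auto. }
  split.
  { intros S U HS HU. split.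
    - intros E x. split; apply Gamma_join_incl; auto.
    - intro H. f_equal. apply pred_ext, H. }
  intros s t Ts Tt. split; [intros -> w _; reflexivity|apply Gamma_separated; auto].
Qed.

End GammaObject.

Section Conjugation.
Variables M N : OLstr.
Hypothesis HM : is_COL M.
Hypothesis HN : is_COL N.
Variable k : ocar M -> ocar N.
Hypothesis Hk : is_COL_mor M N k.
Local Notation pr := (@proj1_sig _ _).

Definition iso_inv (y : ocar N) : ocar M :=
  proj1_sig (constructive_indefinite_description _ (iso_surj M N k Hk y)).

Lemma iso_invK y : k (iso_inv y) = y.
Proof. unfold iso_inv. destruct constructive_indefinite_description as [x E]. exact E. Qed.

Lemma iso_Kinv x : iso_inv (k x) = x.
Proof. apply (iso_inj M N k Hk), iso_invK. Qed.

Lemma iso_inv_iso : is_COL_mor N M iso_inv.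
Proof.
  split; [split|split].
  - intros x y E. rewrite <- (iso_invK x), <- (iso_invK y), E. reflexivity.
  - intro x. exists (k x). apply iso_Kinv.
  - intros x y. rewrite (iso_le M N k Hk), !iso_invK. tauto.
  - intro y. apply (iso_inj M N k Hk). rewrite (iso_oc M N k Hk), !iso_invK. reflexivity.
Qed.

Lemma iso_lub_image S s : is_lub M S s -> is_lub N (fun y => exists x, S x /\ y = k x) (k s).
Proof.
  intro Hs. apply (iso_lub M N k Hk). eapply (is_lub_ext M); [|exact Hs]. intro x. split.
  - intro Sx. eauto.
  - intros [x' [Sx' E]]. rewrite (iso_inj M N k Hk _ _ E). exact Sx'.
Qed.

Lemma iso_ojoin a b : k (ojoin M a b) = ojoin N (k a) (k b).
Proof.
  symmetry. apply (is_lub_unique N HN (pair2 (k a) (k b))); [apply ojoin_spec, HN|].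
  rewrite <- imageP_pair2. apply iso_lub_image, ojoin_spec, HM.
Qed.

Lemma iso_omeet a b : k (omeet M a b) = omeet N (k a) (k b).
Proof.
  rewrite (omeet_ocE M HM), (omeet_ocE N HN), !(iso_oc M N k Hk), iso_ojoin, !(iso_oc M N k Hk).
  reflexivity.
Qed.

Lemma iso_sasaki m x : k (sasaki M m x) = sasaki N (k m) (k x).
Proof.
  rewrite (sasakiE M HM), (sasakiE N HN), iso_omeet, iso_ojoin, (iso_oc M N k Hk). reflexivity.
Qed.

Lemma iso_top t : is_top M t -> is_top N (k t).
Proof. intros Ht y. rewrite <- (iso_invK y). apply (iso_le M N k Hk), Ht. Qed.

Definition conj_map (f : ocar M -> ocar M) : ocar N -> ocar N := fun y => k (f (iso_inv y)).

Lemma conj_adjoint f g : is_adjoint M f g -> is_adjoint N (conj_map f) (conj_map g).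
Proof.
  intros H x y. unfold conj_map.
  rewrite <- (iso_invK y) at 1. rewrite <- (iso_oc M N k Hk), <- (iso_le M N k Hk), (H (iso_inv x)).
  rewrite <- (iso_invK x) at 2. rewrite <- (iso_oc M N k Hk), <- (iso_le M N k Hk). tauto.
Qed.

Definition Lin_conj (a : LinT M) : LinT N := mkLin N (conj_map (pr a)).

Lemma Lin_conjE a : pr (Lin_conj a) = conj_map (pr a).
Proof.
  apply mkLinE. destruct (proj2_sig a) as [g Hg]. exists (conj_map g). apply conj_adjoint, Hg.
Qed.

Lemma Lin_conj_spec (a : LinT M) (c : LinT N) :
  (forall x, pr c (k x) = k (pr a x)) <-> c = Lin_conj a.
Proof.
  split.
  - intro H. apply sig_ext. rewrite Lin_conjE. extensionality y. unfold conj_map.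
    rewrite <- H, iso_invK. reflexivity.
  - intros -> x. rewrite Lin_conjE. unfold conj_map. rewrite iso_Kinv. reflexivity.
Qed.

Lemma Lin_conjK a x : pr (Lin_conj a) (k x) = k (pr a x).
Proof. apply Lin_conj_spec. reflexivity. Qed.

Lemma Lin_conj_inj a b : Lin_conj a = Lin_conj b -> a = b.
Proof.
  intro E. apply sig_ext. extensionality x. apply (iso_inj M N k Hk).
  rewrite <- !Lin_conjK, E. reflexivity.
Qed.

Lemma Lin_conj_piL m : Lin_conj (piL M m) = piL N (k m).
Proof.
  symmetry. apply Lin_conj_spec. intro x. rewrite !(piLE _ HM), (piLE _ HN). symmetry.
  apply iso_sasaki.
Qed.

Lemma Lin_conj_join S : Lin_conj (ijoin (Lin M) S) = ijoin (Lin N) (imageP Lin_conj S).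
Proof.
  symmetry. apply Lin_conj_spec. intro x. apply (Lin_join_eq N HN).
  eapply (is_lub_ext N); [|apply iso_lub_image, (Lin_join_spec M HM)]. intro z. split.
  - intros [y [[f [Sf ->]] ->]]. exists (Lin_conj f). split; [exists f; auto|].
    symmetry. apply Lin_conjK.
  - intros [h [[f [Sf ->]] ->]]. rewrite Lin_conjK. eauto.
Qed.

Lemma Lin_conj_mul a b : Lin_conj (imul (Lin M) a b) = imul (Lin N) (Lin_conj a) (Lin_conj b).
Proof.
  symmetry. apply Lin_conj_spec. intro x. rewrite !(Lin_mulE _), !Lin_conjK. reflexivity.
Qed.

Lemma Lin_conj_inv a : Lin_conj (iinv (Lin M) a) = iinv (Lin N) (Lin_conj a).
Proof.
  apply sig_ext. rewrite Lin_conjE, (Lin_invE M HM), (Lin_invE N HN), Lin_conjE.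
  eapply (is_adjoint_unique N HN).
  - apply conj_adjoint, adj_spec, proj2_sig.
  - apply adj_spec. destruct (proj2_sig a) as [g Hg]. exists (conj_map g). apply conj_adjoint, Hg.
Qed.

Lemma Lin_conj_unit : Lin_conj (iunit (Lin M)) = iunit (Lin N).
Proof. symmetry. apply Lin_conj_spec. intro x. rewrite !(Lin_unitE _). reflexivity. Qed.

Lemma Lin_conj_neg a : Lin_conj (ineg (Lin M) a) = ineg (Lin N) (Lin_conj a).
Proof.
  destruct (top_exists M HM) as [t Ht].
  rewrite (Lin_neg_piL M HM a t Ht), (Lin_neg_piL N HN _ (k t) (iso_top t Ht)), Lin_conj_piL.
  rewrite Lin_conjK, (iso_oc M N k Hk). reflexivity.
Qed.

Lemma Lin_conj_mor : is_IDA_mor (Lin M) (Lin N) Lin_conj.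
Proof.
  repeat split.
  - apply Lin_conj_join.
  - apply Lin_conj_mul.
  - apply Lin_conj_inv.
  - apply Lin_conj_unit.
  - apply Lin_conj_neg.
Qed.

End Conjugation.

Section PowerSetMap.
Variables K1 K2 : IDAstr.
Variable L1 : icar K1 -> Prop.
Variable L2 : icar K2 -> Prop.
Hypothesis L1_tests : forall k, tests K1 k -> L1 k.
Hypothesis L1_mul : forall x y, L1 x -> L1 y -> L1 (imul K1 x y).
Hypothesis L1_inv : forall x, L1 x -> L1 (iinv K1 x).
Hypothesis L1_unit : L1 (iunit K1).
Variable phi : icar K1 -> icar K2.
Hypothesis Hphi : is_IDA_mor K1 K2 phi.
Hypothesis phi_L : forall x, L1 x -> L2 (phi x).
Hypothesis phi_inj : forall x y, phi x = phi y -> x = y.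
Hypothesis phi_onto : forall y, L2 y -> exists x, L1 x /\ phi x = y.
Local Notation P1 := (Pset K1 L1).
Local Notation P2 := (Pset K2 L2).
Local Notation pr := (@proj1_sig _ _).

Definition Pset_map (A : icar P1) : icar P2 := fun c => exists a, A a /\ pr c = phi (pr a).

Definition L_map (a : {x | L1 x}) : {y | L2 y} := exist L2 _ (phi_L _ (proj2_sig a)).

Lemma Pset_map_mem A a : Pset_map A (L_map a) <-> A a.
Proof.
  split; [|exists a; auto]. intros [b [Ab E]].
  rewrite (sig_ext a b (phi_inj _ _ E)). exact Ab.
Qed.

Lemma Pflat_Pset_map A : Pflat K2 L2 (Pset_map A) = phi (Pflat K1 L1 A).
Proof.
  unfold Pflat. rewrite (proj1 Hphi). f_equal. apply pred_ext. intro y.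
  unfold Pelems, imageP, Pset_map. split.
  - intros [c [[a [Aa E]] ->]]. exists (pr a). split; eauto.
  - intros [z [[a [Aa ->]] ->]]. exists (L_map a). simpl. split; eauto.
Qed.

Lemma Pset_map_join S : Pset_map (ijoin P1 S) = ijoin P2 (imageP Pset_map S).
Proof.
  apply pred_ext. intro c. unfold Pset_map, imageP. simpl. split.
  - intros [a [[A [SA Aa]] E]]. exists (Pset_map A). split; [eauto|]. exists a; auto.
  - intros [B [[A [SA ->]] [a [Aa E]]]]. exists a. split; eauto.
Qed.

Lemma Pset_map_mul A B : Pset_map (imul P1 A B) = imul P2 (Pset_map A) (Pset_map B).
Proof.
  apply pred_ext. intro c. unfold Pset_map. simpl. split.
  - intros [d [[a [b [Aa [Bb E1]]]] E2]]. exists (L_map a), (L_map b). simpl.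
    repeat split; eauto. rewrite E2, E1. apply Hphi.
  - intros [a' [b' [[a [Aa E1]] [[b [Bb E2]] E3]]]].
    exists (exist L1 _ (L1_mul _ _ (proj2_sig a) (proj2_sig b))). simpl. split.
    + exists a, b. auto.
    + rewrite E3, E1, E2. symmetry. apply Hphi.
Qed.

Lemma Pset_map_inv A : Pset_map (iinv P1 A) = iinv P2 (Pset_map A).
Proof.
  apply pred_ext. intro c. unfold Pset_map. simpl. split.
  - intros [d [[a [Aa E1]] E2]]. exists (L_map a). simpl. split; [eauto|].
    rewrite E2, E1. apply Hphi.
  - intros [a' [[a [Aa E1]] E2]]. exists (exist L1 _ (L1_inv _ (proj2_sig a))). simpl.
    split; eauto. rewrite E2, E1. symmetry. apply Hphi.
Qed.

Lemma Pset_map_unit : Pset_map (iunit P1) = iunit P2.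
Proof.
  apply pred_ext. intro c. unfold Pset_map. simpl. split.
  - intros [a [E1 E2]]. rewrite E2, E1. apply Hphi.
  - intro E. exists (exist L1 _ L1_unit). simpl. split; auto. rewrite E. symmetry. apply Hphi.
Qed.

Lemma Pset_map_neg A : Pset_map (ineg P1 A) = ineg P2 (Pset_map A).
Proof.
  rewrite (Pset_negE K2 L2), Pflat_Pset_map. apply pred_ext. intro c.
  unfold Pset_map, Psingle. rewrite (Pset_negE K1 L1). split.
  - intros [a [E1 E2]]. rewrite E2, E1. apply Hphi.
  - intro E. exists (exist L1 _ (L1_tests _ (ex_intro _ (Pflat K1 L1 A) eq_refl))).
    simpl. split; [reflexivity|]. rewrite E. symmetry. apply Hphi.
Qed.

Lemma Pset_map_inj A B : Pset_map A = Pset_map B -> A = B.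
Proof.
  intro E. apply pred_ext. intro a. rewrite <- !(Pset_map_mem _ a), E. tauto.
Qed.

Lemma Pset_map_surj B : exists A, Pset_map A = B.
Proof.
  exists (fun a => B (L_map a)). apply pred_ext. intro c. unfold Pset_map. split.
  - intros [a [Ba E]]. rewrite (sig_ext c (L_map a) E). exact Ba.
  - intro Bc. destruct (phi_onto _ (proj2_sig c)) as [x [Lx E]].
    exists (exist L1 x Lx). simpl. split; [|auto].
    rewrite (sig_ext (L_map (exist L1 x Lx)) c E). exact Bc.
Qed.

Lemma Pset_map_iso : is_TODA_mor P1 P2 Pset_map.
Proof.
  split; [repeat split|split].
  - apply Pset_map_join.
  - apply Pset_map_mul.
  - apply Pset_map_inv.
  - apply Pset_map_unit.
  - apply Pset_map_neg.
  - apply Pset_map_inj.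
  - apply Pset_map_surj.
Qed.

End PowerSetMap.

Section GammaMorphism.
Variable T : TFun.
Hypothesis HT1 : T1 T.
Hypothesis HT4 : T4 T.
Variables M N : OLstr.
Hypothesis HM : is_COL M.
Hypothesis HN : is_COL N.
Variable k : ocar M -> ocar N.
Hypothesis Hk : is_COL_mor M N k.
Local Notation pr := (@proj1_sig _ _).
Local Notation conj := (Lin_conj M N k Hk).
Local Notation conj_inv := (Lin_conj N M (iso_inv M N k Hk) (iso_inv_iso M N k Hk)).

Lemma Lin_conj_T a : T (Lin M) a -> T (Lin N) (conj a).
Proof. apply (HT4 _ _ _ (Lin_IDA M HM) (Lin_IDA N HN)), Lin_conj_mor; assumption. Qed.

Lemma Lin_conj_inv_T c : T (Lin N) c -> T (Lin M) (conj_inv c).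
Proof.
  apply (HT4 _ _ _ (Lin_IDA N HN) (Lin_IDA M HM)), Lin_conj_mor; auto using iso_inv_iso.
Qed.

Lemma Lin_conj_invK c : conj (conj_inv c) = c.
Proof.
  symmetry. apply Lin_conj_spec. intro x.
  rewrite <- (iso_Kinv M N k Hk x) at 2. rewrite Lin_conjK. symmetry. apply iso_invK.
Qed.

Lemma Gamma_mor_Pset_map : Gamma_mor T M N k = Pset_map (Lin M) (Lin N) (T (Lin M)) (T (Lin N)) conj.
Proof.
  extensionality A. apply pred_ext. intro c. unfold Gamma_mor, Pset_map.
  split; intros [a [Aa H]]; exists a; split; auto; apply (Lin_conj_spec M N k Hk), H.
Qed.

Lemma Gamma_mor_iso : is_TODA_mor (Gamma T M) (Gamma T N) (Gamma_mor T M N k).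
Proof.
  rewrite Gamma_mor_Pset_map. apply Pset_map_iso.
  - apply T_Lin_tests; assumption.
  - apply T_Lin_mul; assumption.
  - apply T_Lin_inv; assumption.
  - apply T_Lin_unit; assumption.
  - apply Lin_conj_mor; assumption.
  - apply Lin_conj_T.
  - apply Lin_conj_inj.
  - intros c Tc. exists (conj_inv c). split; [apply Lin_conj_inv_T, Tc|apply Lin_conj_invK].
Qed.

Lemma Gamma_mor_piL m : Gamma_mor T M N k (singL T M (piL M m)) = singL T N (piL N (k m)).
Proof.
  apply pred_ext. intro c. unfold Gamma_mor, singL. split.
  - intros [a [Ea H]]. apply (Lin_conj_spec M N k Hk) in H. rewrite H, Ea. apply Lin_conj_piL; assumption.
  - intro E. exists (exist _ (piL M m) (piL_T T HT1 M HM m)). split; [reflexivity|].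
    apply (Lin_conj_spec M N k Hk). rewrite E. symmetry. apply Lin_conj_piL; assumption.
Qed.

End GammaMorphism.

Lemma Gamma_mor_id T M A : Gamma_mor T M M (fun x => x) A = A.
Proof.
  apply pred_ext. intro c. unfold Gamma_mor. split.
  - intros [a [Aa H]]. replace c with a; [exact Aa|]. apply sig_ext, sig_ext.
    extensionality x. symmetry. apply H.
  - intro Ac. exists c. auto.
Qed.

Lemma Gamma_mor_comp T M N P k1 k2 :
  T4 T -> is_COL M -> is_COL N -> is_COL_mor M N k1 ->
  forall A, Gamma_mor T M P (fun x => k2 (k1 x)) A = Gamma_mor T N P k2 (Gamma_mor T M N k1 A).
Proof.
  intros HT4 HM HN Hk1 A. apply pred_ext. intro c. unfold Gamma_mor. split.
  - intros [a [Aa H]].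
    exists (exist _ _ (Lin_conj_T T HT4 M N HM HN k1 Hk1 _ (proj2_sig a))). split.
    + exists a. split; [exact Aa|]. apply Lin_conjK.
    + intro y. destruct (iso_surj M N k1 Hk1 y) as [x <-]. simpl. rewrite H, Lin_conjK. reflexivity.
  - intros [b [[a [Aa H1]] H2]]. exists a. split; [exact Aa|]. intro x. rewrite H2, H1. reflexivity.
Qed.

Section TestLattice.
Variable K : IDAstr.
Hypothesis HK : is_IDA K.
Local Notation J := (ijoin K).
Local Notation "x * y" := (imul K x y).
Local Notation "~~ x" := (ineg K x) (at level 35, right associativity).
Local Notation pr := (@proj1_sig _ _).
Local Notation P := (Psi K).

Lemma neg_tests x : tests K (~~ x). Proof. exists x. reflexivity. Qed.

Lemma tests_negnegK x : tests K x -> ~~ ~~ x = x.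
Proof. intros [l ->]. apply (ineg3 K HK). Qed.

Lemma ineg_join2_negneg x y : ~~ J (pair2 (~~ ~~ x) (~~ ~~ y)) = ~~ J (pair2 x y).
Proof. rewrite <- (imageP_pair2 (fun z => ~~ ~~ z)). apply (ineg_join_negneg K HK). Qed.

Lemma Psi_ocE (a : ocar P) : pr (oc P a) = ~~ pr a.
Proof. reflexivity. Qed.

Lemma Psi_leE (a b : ocar P) : ole P a b <-> ~~ ~~ J (pair2 (pr a) (pr b)) = pr b.
Proof. reflexivity. Qed.

Definition Psi_sup (S : ocar P -> Prop) : ocar P := exist (tests K) (~~ ~~ J (imageP pr S)) (neg_tests _).

Lemma Psi_sup_ub S a : S a -> ole P a (Psi_sup S).
Proof.
  intro Sa. apply Psi_leE. simpl. f_equal.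
  rewrite <- (tests_negnegK (pr a) (proj2_sig a)) at 1. rewrite ineg_join2_negneg.
  f_equal. apply (ijoin_ub K HK). exists a. auto.
Qed.

(* The join of the tests of S with an upper bound u is, up to [~~], a join of copies of u. *)
Lemma Psi_sup_least S u : (forall a, S a -> ole P a u) -> ole P (Psi_sup S) u.
Proof.
  intro Hu. apply Psi_leE. simpl.
  set (V := fun y => y = pr u \/ exists a, imageP pr S a /\ y = J (pair2 a (pr u))).
  assert (EV : J (imageP (fun z => ~~ ~~ z) V) = pr u).
  { apply (ijoin_eq K HK).
    - intros y [z [[-> | [a [[w [Sw ->]] ->]]] ->]].
      + rewrite (tests_negnegK _ (proj2_sig u)). apply (ile_refl K HK).
      + rewrite (proj1 (Psi_leE w u) (Hu w Sw)). apply (ile_refl K HK).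
    - intros v Hv. apply Hv. exists (pr u). split; [left; reflexivity|].
      symmetry. apply tests_negnegK, proj2_sig. }
  rewrite <- (tests_negnegK (pr u) (proj2_sig u)) at 1.
  rewrite ineg_join2_negneg, (ijoin_pair2_distr K HK). fold V.
  rewrite <- (ineg_join_negneg K HK V), EV.
  apply tests_negnegK, proj2_sig.
Qed.

Lemma Psi_sup_spec S : is_lub P S (Psi_sup S).
Proof. split; [apply Psi_sup_ub|apply Psi_sup_least]. Qed.

Hypothesis HP : is_COL P.

Lemma Psi_ojoinE a b : pr (ojoin P a b) = ~~ ~~ J (pair2 (pr a) (pr b)).
Proof.
  unfold ojoin. rewrite (osup_eq P HP a _ _ (Psi_sup_spec (pair2 a b))). simpl.
  rewrite imageP_pair2. reflexivity.
Qed.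

Lemma Psi_sasakiE m w :
  pr (sasaki P m w) = ~~ J (pair2 (~~ pr m) (~~ J (pair2 (~~ pr m) (pr w)))).
Proof.
  rewrite (sasakiE P HP), (omeet_ocE P HP). simpl. rewrite !Psi_ojoinE. simpl.
  rewrite !(ineg3 K HK). reflexivity.
Qed.

(* The fourth IDA axiom with y = e says that (a \/ ~~e)^perp <= a for every test a;
   taking a = 0 shows that ~~e is the top test. *)
Lemma Psi_top t : is_top P t -> pr t = ~~ ~~ iunit K.
Proof.
  intro Ht.
  set (eh := exist (tests K) (~~ ~~ iunit K) (neg_tests _) : ocar P).
  assert (Hkey : forall a : ocar P, ole P (oc P (ojoin P a eh)) a).
  { intro a. apply Psi_leE. destruct (proj2_sig a) as [x Ex].
    pose proof (inegneg_mul K HK x (iunit K)) as H4.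
    rewrite (imul1r K HK), (ineg3 K HK), <- Ex in H4. apply (f_equal (fun z => ~~ z)) in H4.
    rewrite (tests_negnegK _ (proj2_sig a)) in H4.
    simpl. rewrite Psi_ojoinE, (ineg3 K HK). simpl.
    rewrite <- (tests_negnegK (pr a) (proj2_sig a)) at 1.
    rewrite ineg_join2_negneg, pair2C. symmetry. exact H4. }
  destruct (lub_exists P HP (fun _ => False)) as [z [_ Hz]].
  assert (Hz0 : forall w, ole P z w) by (intro w; apply Hz; intros x []).
  pose proof (Hkey z) as H. rewrite (ojoin_idPr P HP _ _ (Hz0 eh)) in H.
  assert (Heh : is_top P eh).
  { intro w. apply (ole_oc P HP). eapply (ole_trans P HP); [exact H|apply Hz0]. }
  rewrite (top_unique P HP t eh); auto.
Qed.

End TestLattice.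

Section TODAFacts.
Variable T : TFun.
Variable K : IDAstr.
Hypothesis HKT : is_TODA T K.

Lemma TODA_IDA : is_IDA K. Proof. exact (proj1 HKT). Qed.
Lemma TODA_COL : is_COL (Psi K). Proof. exact (proj1 (proj2 HKT)). Qed.

Lemma TODA_generated (A : icar K -> Prop) : (forall x, T K x -> A x) ->
  (forall x y, A x -> A y -> A (imul K x y)) -> (forall x, A x -> A (iinv K x)) ->
  (forall S, (forall x, S x -> A x) -> A (ijoin K S)) -> forall x, A x.
Proof. apply (proj1 (proj2 (proj2 HKT))). Qed.

Lemma TODA_join_inj (S U : icar K -> Prop) : (forall x, S x -> T K x) ->
  (forall x, U x -> T K x) -> ijoin K S = ijoin K U -> forall x, S x <-> U x.
Proof. intros HS HU. apply (proj1 (proj2 (proj2 (proj2 HKT))) S U HS HU). Qed.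

Lemma TODA_separated s t : T K s -> T K t -> (s = t <-> equivT K s t).
Proof. apply (proj2 (proj2 (proj2 (proj2 HKT)))). Qed.

End TODAFacts.

Section Lambda.
Variable T : TFun.
Hypothesis HT1 : T1 T.
Hypothesis HT2 : T2 T.
Variable K : IDAstr.
Hypothesis HKT : is_TODA T K.
Local Notation J := (ijoin K).
Local Notation "x * y" := (imul K x y).
Local Notation "~~ x" := (ineg K x) (at level 35, right associativity).
Local Notation pr := (@proj1_sig _ _).
Local Notation G := (Gamma T (Psi K)).
Local Notation LP := (Lin (Psi K)).
Let HK := TODA_IDA T K HKT.
Let HP := TODA_COL T K HKT.

Lemma T_tests k : tests K k -> T K k. Proof. apply (HT1 K HK). Qed.
Lemma T_mul x y : T K x -> T K y -> T K (x * y). Proof. apply (HT1 K HK). Qed.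
Lemma T_inv x : T K x -> T K (iinv K x). Proof. apply (HT1 K HK). Qed.
Lemma T_unit : T K (iunit K). Proof. apply (HT1 K HK). Qed.

Let HT2K := HT2 K HK HP (TODA_separated T K HKT).
Lemma nu_linear k : T K k -> linear (Psi K) (nu K k). Proof. apply HT2K. Qed.
Lemma nuL_T k : T K k -> T LP (nuL K k). Proof. apply HT2K. Qed.
Lemma nuL_inj k l : T K k -> T K l -> nuL K k = nuL K l -> k = l. Proof. apply HT2K. Qed.
Lemma nuL_onto f : T LP f -> exists k, T K k /\ nuL K k = f. Proof. apply HT2K. Qed.
Lemma nuL_mul k l : T K k -> T K l -> nuL K (k * l) = imul LP (nuL K k) (nuL K l).
Proof. apply HT2K. Qed.
Lemma nuL_unit : nuL K (iunit K) = iunit LP. Proof. apply HT2K. Qed.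
Lemma nuL_inv k : T K k -> nuL K (iinv K k) = iinv LP (nuL K k). Proof. apply HT2K. Qed.

Lemma nuLE k : T K k -> pr (nuL K k) = nu K k.
Proof. intro Tk. apply mkLinE, nu_linear, Tk. Qed.

Definition nuT (s : icar K) (Ts : T K s) : {f | T LP f} := exist _ (nuL K s) (nuL_T s Ts).

Definition is_decomp (k : icar K) (S : icar K -> Prop) := (forall s, S s -> T K s) /\ J S = k.

Lemma decomp_single x : T K x -> is_decomp x (fun c => c = x).
Proof. intro Tx. split; [intros s ->; exact Tx|apply (ijoin1 K HK)]. Qed.

Lemma decomp_mul k l S U : is_decomp k S -> is_decomp l U ->
  is_decomp (k * l) (fun c => exists s u, S s /\ U u /\ c = s * u).
Proof.
  intros [HS <-] [HU <-]. split; [|symmetry; apply (ijoin_mul K HK)].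
  intros c [s [u [Ss [Uu ->]]]]. apply T_mul; auto.
Qed.

Lemma decomp_inv k S : is_decomp k S -> is_decomp (iinv K k) (imageP (iinv K) S).
Proof.
  intros [HS <-]. split; [|symmetry; apply (iinvJ K HK)].
  intros c [s [Ss ->]]. apply T_inv; auto.
Qed.

Lemma decomp_union (F : icar K -> Prop) : (forall x, F x -> exists S, is_decomp x S) ->
  is_decomp (J F) (fun s => exists x, F x /\ exists S, is_decomp x S /\ S s).
Proof.
  intro HF. split; [intros s [x [_ [S [[HS _] Ss]]]]; auto|].
  apply (ile_antisym K HK); apply (ijoin_least K HK).
  - intros s [x [Fx [S [[_ ES] Ss]]]]. apply (ile_trans K HK) with x.
    + rewrite <- ES. apply (ijoin_ub K HK), Ss.
    + apply (ijoin_ub K HK), Fx.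
  - intros x Fx. destruct (HF x Fx) as [S [HS ES]]. rewrite <- ES.
    apply (ijoin_least K HK). intros s Ss. apply (ijoin_ub K HK). exists x. split; [exact Fx|].
    exists S. split; [split|]; auto.
Qed.

Lemma decomp_exists k : exists S, is_decomp k S.
Proof.
  revert k. apply (TODA_generated T K HKT).
  - intros x Tx. exists (fun c => c = x). apply decomp_single, Tx.
  - intros x y [S HS] [U HU]. eexists. apply decomp_mul; eauto.
  - intros x [S HS]. eexists. apply decomp_inv; eauto.
  - intros F HF. eexists. apply decomp_union, HF.
Qed.

Lemma decomp_unique k S S' : is_decomp k S -> is_decomp k S' -> forall s, S s <-> S' s.
Proof. intros [H1 E1] [H2 E2]. apply (TODA_join_inj T K HKT S S' H1 H2). congruence. Qed.

Lemma lam_mem k S : is_decomp k S -> forall c, lam T K k c <-> exists s, S s /\ pr c = nuL K s.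
Proof.
  intros HS c. unfold lam. split.
  - intros [S' [HS' [ES' [s [S's E]]]]]. exists s. split; auto.
    apply (decomp_unique k S S'); [exact HS|split|]; auto.
  - intros [s [Ss E]]. exists S. destruct HS as [HS ES]. eauto.
Qed.

Lemma Pflat_lam_bullet k w :
  pr (pr (Pflat LP (T LP) (lam T K k)) w) = bullet K k (pr w).
Proof.
  destruct (decomp_exists k) as [S HS].
  unfold Pflat. rewrite (Lin_join_eq _ HP _ w _ (Psi_sup_spec K HK _)). simpl.
  match goal with |- ~~ ~~ J ?X = _ =>
    replace X with (imageP (fun x => ~~ ~~ x) (imageP (fun s => s * pr w) S)) end.
  { rewrite (ineg_join_negneg K HK), <- (imulJl K HK), (proj2 HS). reflexivity. }
  rewrite imageP_comp. apply pred_ext. intro y. unfold Pelems, imageP. split.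
  - intros [s [Ss ->]]. exists (nu K s w). split; [|reflexivity].
    exists (nuL K s). rewrite nuLE by apply HS, Ss. split; [|reflexivity].
    exists (nuT s (proj1 HS s Ss)). split; [|reflexivity]. apply (lam_mem k S HS). eauto.
  - intros [v [[f [[c [Hc ->]] ->]] ->]]. apply (lam_mem k S HS) in Hc.
    destruct Hc as [s [Ss ->]]. exists s. split; [exact Ss|]. rewrite nuLE by apply HS, Ss.
    reflexivity.
Qed.

Lemma nuL_neg k : nuL K (~~ k) = ineg LP (Pflat LP (T LP) (lam T K k)).
Proof.
  destruct (top_exists (Psi K) HP) as [t Ht].
  rewrite (Lin_neg_piL _ HP _ t Ht). apply sig_ext.
  rewrite (piLE _ HP), nuLE by (apply T_tests; eexists; reflexivity).
  extensionality w. apply sig_ext.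
  rewrite (Psi_sasakiE K HK HP), Psi_ocE, Pflat_lam_bullet, (Psi_top K HK HP t Ht).
  change (pr (nu K (~~ k) w)) with (bullet K (~~ k) (pr w)). unfold bullet.
  rewrite (ineg_mul_negneg K HK), (imul1r K HK), !(ineg3 K HK).
  rewrite <- (inegneg_mul K HK), (ineg3 K HK). reflexivity.
Qed.

Ltac Gamma_simpl := cbn [imul ijoin iinv iunit Gamma Pset].

Lemma lam_join F : lam T K (J F) = ijoin G (imageP (lam T K) F).
Proof.
  pose proof (decomp_union F (fun x _ => decomp_exists x)) as HU.
  apply pred_ext. intro c. rewrite (lam_mem _ _ HU). Gamma_simpl. unfold imageP. split.
  - intros [s [[x [Fx [S [HS Ss]]]] E]]. exists (lam T K x). split; [eauto|].
    apply (lam_mem x S HS). eauto.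
  - intros [A [[x [Fx ->]] Hc]]. destruct (decomp_exists x) as [S HS].
    apply (lam_mem x S HS) in Hc. destruct Hc as [s [Ss E]]. exists s. split; eauto.
Qed.

Lemma lam_mul k l : lam T K (k * l) = imul G (lam T K k) (lam T K l).
Proof.
  destruct (decomp_exists k) as [S HS], (decomp_exists l) as [U HU].
  pose proof (decomp_mul k l S U HS HU) as HV.
  apply pred_ext. intro c. rewrite (lam_mem _ _ HV). Gamma_simpl. split.
  - intros [v [[s [u [Ss [Uu ->]]]] E]].
    exists (nuT s (proj1 HS s Ss)), (nuT u (proj1 HU u Uu)). cbn [nuT proj1_sig].
    split; [|split].
    + apply (lam_mem k S HS). eauto.
    + apply (lam_mem l U HU). eauto.
    + rewrite E. apply nuL_mul; [apply HS|apply HU]; auto.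
  - intros [a [b [Ha [Hb E]]]].
    apply (lam_mem k S HS) in Ha. apply (lam_mem l U HU) in Hb.
    destruct Ha as [s [Ss Ea]], Hb as [u [Uu Eb]]. exists (s * u). split; [eauto|].
    rewrite E, Ea, Eb. symmetry. apply nuL_mul; [apply HS|apply HU]; auto.
Qed.

Lemma lam_inv k : lam T K (iinv K k) = iinv G (lam T K k).
Proof.
  destruct (decomp_exists k) as [S HS]. pose proof (decomp_inv k S HS) as HV.
  apply pred_ext. intro c. rewrite (lam_mem _ _ HV). Gamma_simpl. split.
  - intros [v [[s [Ss ->]] E]]. exists (nuT s (proj1 HS s Ss)). cbn [nuT proj1_sig]. split.
    + apply (lam_mem k S HS). eauto.
    + rewrite E. apply nuL_inv, HS, Ss.
  - intros [a [Ha E]]. apply (lam_mem k S HS) in Ha. destruct Ha as [s [Ss Ea]].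
    exists (iinv K s). split; [exists s; auto|]. rewrite E, Ea. symmetry. apply nuL_inv, HS, Ss.
Qed.

Lemma lam_unit : lam T K (iunit K) = iunit G.
Proof.
  apply pred_ext. intro c. rewrite (lam_mem _ _ (decomp_single _ T_unit)). Gamma_simpl. split.
  - intros [s [-> E]]. rewrite E. apply nuL_unit.
  - intro E. exists (iunit K). split; [reflexivity|]. rewrite E. symmetry. apply nuL_unit.
Qed.

Lemma lam_neg k : lam T K (~~ k) = ineg G (lam T K k).
Proof.
  assert (Tn : T K (~~ k)) by (apply T_tests; eexists; reflexivity).
  apply pred_ext. intro c. rewrite (lam_mem _ _ (decomp_single _ Tn)).
  change (ineg G (lam T K k) c) with (pr c = ineg LP (Pflat LP (T LP) (lam T K k))).
  rewrite <- nuL_neg. split; [intros [s [-> E]]; exact E|eauto].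
Qed.

Lemma lam_inj k l : lam T K k = lam T K l -> k = l.
Proof.
  intro E. destruct (decomp_exists k) as [S HS], (decomp_exists l) as [U HU].
  assert (HSU : forall s, S s -> U s).
  { intros s Ss. assert (Hc : lam T K k (nuT s (proj1 HS s Ss))) by (apply (lam_mem k S HS); eauto).
    rewrite E in Hc. apply (lam_mem l U HU) in Hc. destruct Hc as [u [Uu Eu]].
    rewrite (nuL_inj s u (proj1 HS s Ss) (proj1 HU u Uu) Eu). exact Uu. }
  assert (HUS : forall s, U s -> S s).
  { intros s Us. assert (Hc : lam T K l (nuT s (proj1 HU s Us))) by (apply (lam_mem l U HU); eauto).
    rewrite <- E in Hc. apply (lam_mem k S HS) in Hc. destruct Hc as [u [Su Eu]].
    rewrite (nuL_inj s u (proj1 HU s Us) (proj1 HS u Su) Eu). exact Su. }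
  rewrite <- (proj2 HS), <- (proj2 HU). f_equal. apply pred_ext. split; auto.
Qed.

Lemma lam_surj B : exists k, lam T K k = B.
Proof.
  set (S := fun s => T K s /\ exists c, B c /\ pr c = nuL K s).
  assert (HS : is_decomp (J S) S) by (split; [intros s [Ts _]; exact Ts|reflexivity]).
  exists (J S). apply pred_ext. intro c. rewrite (lam_mem _ _ HS). split.
  - intros [s [[Ts [c' [Bc' E']]] E]]. rewrite (sig_ext c c' (eq_trans E (eq_sym E'))). exact Bc'.
  - intro Bc. destruct (nuL_onto (pr c) (proj2_sig c)) as [s [Ts Es]].
    exists s. split; [split; [exact Ts|exists c; auto]|auto].
Qed.

Lemma lam_iso : is_TODA_mor K G (lam T K).
Proof.
  split; [repeat split|split].
  - apply lam_join.
  - apply lam_mul.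
  - apply lam_inv.
  - apply lam_unit.
  - apply lam_neg.
  - apply lam_inj.
  - apply lam_surj.
Qed.

End Lambda.

Section Naturality.
Variable T : TFun.
Hypothesis HT1 : T1 T.
Hypothesis HT2 : T2 T.
Hypothesis HT4 : T4 T.
Variables K1 K2 : IDAstr.
Hypothesis HK1 : is_TODA T K1.
Hypothesis HK2 : is_TODA T K2.
Variable phi : icar K1 -> icar K2.
Hypothesis Hphi : is_TODA_mor K1 K2 phi.
Local Notation pr := (@proj1_sig _ _).

Lemma TODA_mor_join S : phi (ijoin K1 S) = ijoin K2 (imageP phi S). Proof. apply Hphi. Qed.
Lemma TODA_mor_mul x y : phi (imul K1 x y) = imul K2 (phi x) (phi y). Proof. apply Hphi. Qed.
Lemma TODA_mor_neg x : phi (ineg K1 x) = ineg K2 (phi x). Proof. apply Hphi. Qed.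
Lemma TODA_mor_inj x y : phi x = phi y -> x = y. Proof. apply Hphi. Qed.
Lemma TODA_mor_surj y : exists x, phi x = y. Proof. apply Hphi. Qed.

Lemma TODA_mor_T k : T K1 k -> T K2 (phi k).
Proof. apply (HT4 K1 K2 phi (TODA_IDA T K1 HK1) (TODA_IDA T K2 HK2) (proj1 Hphi)). Qed.

Lemma TODA_mor_tests x : tests K1 x -> tests K2 (phi x).
Proof. intros [l ->]. exists (phi l). apply TODA_mor_neg. Qed.

Definition Psi_map (w : ocar (Psi K1)) : ocar (Psi K2) :=
  exist _ (phi (pr w)) (TODA_mor_tests _ (proj2_sig w)).

Lemma Psi_restriction_surj (g : ocar (Psi K1) -> ocar (Psi K2)) :
  (forall w, pr (g w) = phi (pr w)) -> forall y, exists x, g x = y.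
Proof.
  intros Hg [y [l ->]]. destruct (TODA_mor_surj l) as [l' <-].
  exists (exist _ (ineg K1 l') (neg_tests K1 l')). apply sig_ext. rewrite Hg. apply TODA_mor_neg.
Qed.

Lemma Psi_map_iso : is_COL_mor (Psi K1) (Psi K2) Psi_map.
Proof.
  split; [split|split].
  - intros a b E. apply (f_equal pr) in E. apply sig_ext, TODA_mor_inj, E.
  - apply Psi_restriction_surj. reflexivity.
  - intros a b. rewrite !Psi_leE. simpl.
    rewrite <- (imageP_pair2 phi), <- TODA_mor_join, <- !TODA_mor_neg.
    split; [intros ->; reflexivity|apply TODA_mor_inj].
  - intro a. apply sig_ext. apply TODA_mor_neg.
Qed.

Lemma nu_TODA_mor (g : ocar (Psi K1) -> ocar (Psi K2)) :
  (forall w, pr (g w) = phi (pr w)) -> forall s x, g (nu K1 s x) = nu K2 (phi s) (g x).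
Proof.
  intros Hg s x. apply sig_ext. rewrite !Hg. simpl. rewrite Hg. unfold bullet.
  rewrite !TODA_mor_neg, TODA_mor_mul. reflexivity.
Qed.

Lemma lam_natural (g : ocar (Psi K1) -> ocar (Psi K2)) : (forall w, pr (g w) = phi (pr w)) ->
  forall k, Gamma_mor T (Psi K1) (Psi K2) g (lam T K1 k) = lam T K2 (phi k).
Proof.
  intros Hg k. destruct (decomp_exists T HT1 K1 HK1 k) as [S [HS ES]].
  assert (HS2 : is_decomp T K2 (phi k) (imageP phi S)).
  { split; [intros s2 [s [Ss ->]]; apply TODA_mor_T; auto|].
    rewrite <- ES. symmetry. apply TODA_mor_join. }
  apply pred_ext. intro c. rewrite (lam_mem T K2 HK2 _ _ HS2 c). unfold Gamma_mor. split.
  - intros [a [Ha Hc]]. apply (lam_mem T K1 HK1 k S (conj HS ES)) in Ha.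
    destruct Ha as [s [Ss Ea]]. exists (phi s). split; [exists s; auto|].
    apply sig_ext. rewrite (nuLE T HT2 K2 HK2) by (apply TODA_mor_T; auto).
    extensionality y. destruct (Psi_restriction_surj g Hg y) as [x <-].
    rewrite Hc, Ea, (nuLE T HT2 K1 HK1) by auto. apply nu_TODA_mor, Hg.
  - intros [s2 [[s [Ss ->]] E]]. exists (nuT T HT2 K1 HK1 s (HS s Ss)). split.
    + apply (lam_mem T K1 HK1 k S (conj HS ES)). exists s. split; auto.
    + intro x. cbn [nuT proj1_sig].
      rewrite E, (nuLE T HT2 K2 HK2), (nuLE T HT2 K1 HK1) by (auto; apply TODA_mor_T; auto).
      symmetry. apply nu_TODA_mor, Hg.
Qed.

End Naturality.

Lemma decomp_unique_exists T K : T1 T -> is_TODA T K -> forall k,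
  exists S, is_decomp T K k S /\ forall S', is_decomp T K k S' -> forall s, S' s <-> S s.
Proof.
  intros HT1 HKT k. destruct (decomp_exists T HT1 K HKT k) as [S HS].
  exists S. split; [exact HS|]. intros S' HS'. apply (decomp_unique T K HKT k); assumption.
Qed.

Theorem theorem6p5 (T : TFun)
  (HT1 : T1 T) (HT2 : T2 T) (HT3 : T3 T) (HT4 : T4 T) :
  (* Gamma : COL -> T-ODA is a functor *)
  (forall M, is_COL M -> is_TODA T (Gamma T M)) /\
  (forall M N (k : ocar M -> ocar N), is_COL M -> is_COL N -> is_COL_mor M N k ->
     (forall a, T (Lin M) a -> exists c, T (Lin N) c /\
        forall x, proj1_sig c (k x) = k (proj1_sig a x)) /\
     is_TODA_mor (Gamma T M) (Gamma T N) (Gamma_mor T M N k)) /\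
  (forall M, is_COL M -> forall A, Gamma_mor T M M (fun x => x) A = A) /\
  (forall M N P (k1 : ocar M -> ocar N) (k2 : ocar N -> ocar P),
     is_COL M -> is_COL N -> is_COL P -> is_COL_mor M N k1 -> is_COL_mor N P k2 ->
     forall A, Gamma_mor T M P (fun x => k2 (k1 x)) A
               = Gamma_mor T N P k2 (Gamma_mor T M N k1 A)) /\
  (* Psi : T-ODA -> COL is a functor (its morphism part is restriction) *)
  (forall K, is_TODA T K -> is_COL (Psi K)) /\
  (forall K1 K2 (phi : icar K1 -> icar K2), is_TODA T K1 -> is_TODA T K2 ->
     is_TODA_mor K1 K2 phi ->
     exists g : ocar (Psi K1) -> ocar (Psi K2),
       (forall w, proj1_sig (g w) = phi (proj1_sig w)) /\ is_COL_mor (Psi K1) (Psi K2) g) /\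
  (* mu : 1_COL => Psi o Gamma, mu_M(m) = {pi_m}, is a natural isomorphism *)
  (forall M, is_COL M ->
     exists mu : ocar M -> ocar (Psi (Gamma T M)),
       (forall m, proj1_sig (mu m) = singL T M (piL M m)) /\
       is_COL_mor M (Psi (Gamma T M)) mu) /\
  (forall M N (k : ocar M -> ocar N), is_COL M -> is_COL N -> is_COL_mor M N k ->
     forall m, Gamma_mor T M N k (singL T M (piL M m)) = singL T N (piL N (k m))) /\
  (* lambda : 1_TODA => Gamma o Psi is a natural isomorphism *)
  (forall K, is_TODA T K -> forall k, exists S : icar K -> Prop,
     (forall s, S s -> T K s) /\ ijoin K S = k /\
     forall S' : icar K -> Prop, (forall s, S' s -> T K s) -> ijoin K S' = k ->
       forall s, S' s <-> S s) /\
  (forall K, is_TODA T K -> is_TODA_mor K (Gamma T (Psi K)) (lam T K)) /\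
  (forall K1 K2 (phi : icar K1 -> icar K2), is_TODA T K1 -> is_TODA T K2 ->
     is_TODA_mor K1 K2 phi ->
     forall g : ocar (Psi K1) -> ocar (Psi K2),
       (forall w, proj1_sig (g w) = phi (proj1_sig w)) ->
       forall k, Gamma_mor T (Psi K1) (Psi K2) g (lam T K1 k) = lam T K2 (phi k)).
Proof.
  split; [intros M HM; apply Gamma_TODA; assumption|].
  split.
  { intros M N k HM HN Hk. split; [|apply Gamma_mor_iso; assumption].
    intros a Ta. exists (Lin_conj M N k Hk a).
    split; [apply Lin_conj_T; assumption|apply Lin_conjK]. }
  split; [intros M _ A; apply Gamma_mor_id|].
  split; [intros M N P k1 k2 HM HN _ Hk1 _; apply Gamma_mor_comp; assumption|].
  split; [apply TODA_COL|].
  split; [intros K1 K2 phi HK1 HK2 Hphi; exists (Psi_map K1 K2 phi Hphi);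
          split; [reflexivity|apply Psi_map_iso]|].
  split; [intros M HM; exists (muG T HT1 M HM); split; [reflexivity|apply muG_iso]|].
  split; [intros M N k HM HN Hk; apply Gamma_mor_piL; assumption|].
  split.
  { intros K HK k. destruct (decomp_unique_exists T K HT1 HK k) as [S [[HS ES] Huniq]].
    exists S. split; [exact HS|split; [exact ES|]].
    intros S' HS' ES'. apply Huniq. split; assumption. }
  split; [apply lam_iso; assumption|].
  intros K1 K2 phi HK1 HK2 Hphi. apply lam_natural; assumption.
Qed.
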